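(* Let $H_0,H_1$ be complex Hilbert spaces, $G$ a densely defined closed operator from $H_0$ into $H_1$ and $D$ a densely defined closed operator from $H_1$ into $H_0$ with $-G^*\subset D$. Let $H$ be a Hilbert space and $\kappa\in\mathcal{L}(\mathrm{BD}(G),H)$ injective with dense range. Let $a\in\mathcal{L}(H_1)$ and $m\in\mathcal{L}(H_0)$ be coercive. Then the Dirichlet-to-Neumann operator $\Lambda_H$ in $H$ associated with $-DaG+m$ is m-sectorial. In particular, if both $a$ and $m$ are self-adjoint, then $\Lambda_H$ is self-adjoint.
   Context: Put $\mathring D=-G^*$ and $\mathring G=-D^*$. Domains carry graph inner products, e.g. $(u,v)_{\mathrm{dom}(G)}=(u,v)_{H_0}+(Gu,Gv)_{H_1}$. $\mathrm{BD}(G)$ is the orthogonal complement of $\mathrm{dom}(\mathring G)$ in $\mathrm{dom}(G)$, $\mathrm{BD}(D)$ the orthogonal complement of $\mathrm{dom}(\mathring D)$ in $\mathrm{dom}(D)$, with induced inner products; $\pi_{\mathrm{BD}(D)}$ is the orthogonal projection of $\mathrm{dom}(D)$ onto $\mathrm{BD}(D)$. $G$ maps $\mathrm{BD}(G)$ into $\mathrm{BD}(D)$. Coercive: $\mathrm{Re}(Mx,x)\ge\mu\|x\|^2$ for some $\mu>0$. For coercive $a,m$ and $u_0\in\mathrm{BD}(G)$ there is a unique $u\in\mathrm{dom}(G)$ with $aGu\in\mathrm{dom}(D)$, $mu-DaGu=0$, $u-u_0\in\mathrm{dom}(\mathring G)$; set $\Lambda u_0=\pi_{\mathrm{BD}(D)}(aGu)$.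 $\kappa^*\colon H\to\mathrm{BD}(G)$ denotes the Hilbert space adjoint of $\kappa$. The operator $\Lambda_H$ in $H$ is defined by: for $\varphi,\psi\in H$, $\varphi\in\mathrm{dom}(\Lambda_H)$ and $\Lambda_H\varphi=\psi$ iff there exists $u_0\in\mathrm{BD}(G)$ with $\kappa(u_0)=\varphi$ and $\Lambda u_0=G\kappa^*\psi$. *)

From Stdlib Require Import Reals.
From Coquelicot Require Import Complex.
Open Scope R_scope.

Record CHilbert := {
  hs :> Type;
  hzero : hs;
  hadd : hs -> hs -> hs;
  hopp : hs -> hs;
  hscal : C -> hs -> hs;
  hinner : hs -> hs -> C;
  hadd_assoc : forall x y z, hadd x (hadd y z) = hadd (hadd x y) z;
  hadd_comm : forall x y, hadd x y = hadd y x;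
  hadd_zero : forall x, hadd x hzero = x;
  hadd_opp : forall x, hadd x (hopp x) = hzero;
  hscal_assoc : forall (a b : C) x, hscal a (hscal b x) = hscal (Cmult a b) x;
  hscal_one : forall x, hscal (RtoC 1) x = x;
  hscal_distr_l : forall (a : C) x y, hscal a (hadd x y) = hadd (hscal a x) (hscal a y);
  hscal_distr_r : forall (a b : C) x, hscal (Cplus a b) x = hadd (hscal a x) (hscal b x);
  hinner_conj : forall x y, hinner y x = Cconj (hinner x y);
  hinner_add_l : forall x y z, hinner (hadd x y) z = Cplus (hinner x z) (hinner y z);
  hinner_scal_l : forall (a : C) x y, hinner (hscal a x) y = Cmult a (hinner x y);
  hinner_pos : forall x, 0 <= Re (hinner x x);
  hinner_def : forall x, hinner x x = RtoC 0 -> x = hzero;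
  hcomplete : forall u : nat -> hs,
    (forall eps, 0 < eps -> exists N, forall n k, (N <= n)%nat -> (N <= k)%nat ->
        sqrt (Re (hinner (hadd (u n) (hopp (u k))) (hadd (u n) (hopp (u k))))) < eps) ->
    exists l, forall eps, 0 < eps -> exists N, forall n, (N <= n)%nat ->
        sqrt (Re (hinner (hadd (u n) (hopp l)) (hadd (u n) (hopp l)))) < eps
}.

Arguments hzero {_}.
Arguments hadd {_} _ _.
Arguments hopp {_} _.
Arguments hscal {_} _ _.
Arguments hinner {_} _ _.

Definition hsub {X : CHilbert} (x y : X) : X := hadd x (hopp y).
Definition hnorm {X : CHilbert} (x : X) : R := sqrt (Re (hinner x x)).

Definition cvg_to {X : CHilbert} (u : nat -> X) (l : X) : Prop :=
  forall eps, 0 < eps -> exists N, forall n, (N <= n)%nat -> hnorm (hsub (u n) l) < eps.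

Definition is_subspace {X : CHilbert} (S : X -> Prop) : Prop :=
  S hzero /\ (forall x y, S x -> S y -> S (hadd x y)) /\
  (forall (c : C) x, S x -> S (hscal c x)).

Definition dense_set {X : CHilbert} (S : X -> Prop) : Prop :=
  forall x eps, 0 < eps -> exists s, S s /\ hnorm (hsub x s) < eps.

Section Defs.
Variables X Y : CHilbert.

(* an operator from X to Y with domain dom; values of T off dom are irrelevant *)
Definition linear_on (dom : X -> Prop) (T : X -> Y) : Prop :=
  (forall x y, dom x -> dom y -> T (hadd x y) = hadd (T x) (T y)) /\
  (forall (c : C) x, dom x -> T (hscal c x) = hscal c (T x)).

Definition closed_op (dom : X -> Prop) (T : X -> Y) : Prop :=
  forall (u : nat -> X) x y, (forall n, dom (u n)) ->
    cvg_to u x -> cvg_to (fun n => T (u n)) y -> dom x /\ T x = y.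

Definition densely_defined_closed (dom : X -> Prop) (T : X -> Y) : Prop :=
  is_subspace dom /\ linear_on dom T /\ dense_set dom /\ closed_op dom T.

(* adj_rel dom T y z  :<->  y is in dom(T^* ) and T^* y = z *)
Definition adj_rel (dom : X -> Prop) (T : X -> Y) (y : Y) (z : X) : Prop :=
  forall x, dom x -> hinner (T x) y = hinner x z.

Definition dom_adj (dom : X -> Prop) (T : X -> Y) (y : Y) : Prop :=
  exists z, adj_rel dom T y z.

Definition graph_inner (T : X -> Y) (x y : X) : C :=
  Cplus (hinner x y) (hinner (T x) (T y)).

Definition graph_norm (T : X -> Y) (x : X) : R := sqrt (Re (graph_inner T x x)).

Definition bounded_linear (T : X -> Y) : Prop :=
  linear_on (fun _ => True) T /\ exists c, forall x, hnorm (T x) <= c * hnorm x.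

End Defs.

Arguments linear_on {_ _} _ _.
Arguments closed_op {_ _} _ _.
Arguments densely_defined_closed {_ _} _ _.
Arguments adj_rel {_ _} _ _ _ _.
Arguments dom_adj {_ _} _ _ _.
Arguments graph_inner {_ _} _ _ _.
Arguments graph_norm {_ _} _ _.
Arguments bounded_linear {_ _} _.

Definition coercive {X : CHilbert} (M : X -> X) : Prop :=
  exists mu, 0 < mu /\ forall x, mu * (hnorm x * hnorm x) <= Re (hinner (M x) x).

Definition selfadjoint_bounded {X : CHilbert} (M : X -> X) : Prop :=
  forall x y, hinner (M x) y = hinner x (M y).

Section Setting.
Variables (H0 H1 H : CHilbert).
Variables (domG : H0 -> Prop) (G : H0 -> H1) (domD : H1 -> Prop) (D : H1 -> H0).

Definition minus_adj_sub : Prop :=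
  forall y z, adj_rel domG G y z -> domD y /\ D y = hopp z.

(* dom(G°) = dom(-D^* ) = dom(D^* ),  dom(D°) = dom(-G^* ) = dom(G^* ) *)
Definition dom_Gring (x : H0) : Prop := dom_adj domD D x.
Definition dom_Dring (y : H1) : Prop := dom_adj domG G y.

Definition BD_G (u : H0) : Prop :=
  domG u /\ forall v, dom_Gring v -> graph_inner G u v = RtoC 0.
Definition BD_D (y : H1) : Prop :=
  domD y /\ forall v, dom_Dring v -> graph_inner D y v = RtoC 0.

(* p = pi_{BD(D)} q  (orthogonal projection in dom(D)) *)
Definition proj_BD_D (q p : H1) : Prop :=
  BD_D p /\ forall r, BD_D r -> graph_inner D (hsub q p) r = RtoC 0.

Variables (a : H1 -> H1) (m : H0 -> H0).

Definition Lambda_rel (u0 : H0) (f : H1) : Prop :=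
  exists u, domG u /\ domD (a (G u)) /\ hsub (m u) (D (a (G u))) = hzero /\
            dom_Gring (hsub u u0) /\ proj_BD_D (a (G u)) f.

Variable kappa : H0 -> H.  (* only its restriction to BD(G) matters *)

Definition kappa_hyp : Prop :=
  linear_on BD_G kappa /\
  (exists c, forall u, BD_G u -> hnorm (kappa u) <= c * graph_norm G u) /\
  (forall u v, BD_G u -> BD_G v -> kappa u = kappa v -> u = v) /\
  (forall h eps, 0 < eps -> exists u, BD_G u /\ hnorm (hsub h (kappa u)) < eps).

(* w = kappa^* psi  (Hilbert adjoint, BD(G) with the graph inner product) *)
Definition kappa_adj (psi : H) (w : H0) : Prop :=
  BD_G w /\ forall u, BD_G u -> hinner (kappa u) psi = graph_inner G u w.

Definition DtN_H (phi psi : H) : Prop :=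
  exists u0, BD_G u0 /\ kappa u0 = phi /\
    exists w, kappa_adj psi w /\ Lambda_rel u0 (G w).

End Setting.

Definition linear_rel {X : CHilbert} (T : X -> X -> Prop) : Prop :=
  T hzero hzero /\
  (forall x1 y1 x2 y2, T x1 y1 -> T x2 y2 -> T (hadd x1 x2) (hadd y1 y2)) /\
  (forall (c : C) x y, T x y -> T (hscal c x) (hscal c y)).

Definition single_valued {X : CHilbert} (T : X -> X -> Prop) : Prop :=
  forall x y1 y2, T x y1 -> T x y2 -> y1 = y2.

(* Kato: T is m-sectorial if it is a (linear) operator whose numerical range lies in
   a sector {z : |arg (z - gamma)| <= theta}, theta < pi/2 (i.e. |Im z| <= c (Re z - gamma),
   c = tan theta >= 0), and T - gamma is m-accretive, i.e. T - gamma + zeta is surjective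
   for some zeta > 0. *)
Definition m_sectorial {X : CHilbert} (T : X -> X -> Prop) : Prop :=
  linear_rel T /\ single_valued T /\
  exists gamma c, 0 <= c /\
    (forall x y, T x y -> hnorm x = 1 ->
       Rabs (Im (hinner y x)) <= c * (Re (hinner y x) - gamma)) /\
    exists zeta, 0 < zeta /\
      forall f, exists x y, T x y /\ hadd y (hscal (RtoC (zeta - gamma)) x) = f.

Definition selfadjoint_rel {X : CHilbert} (T : X -> X -> Prop) : Prop :=
  linear_rel T /\ single_valued T /\ dense_set (fun x => exists y, T x y) /\
  forall x y, T x y <->
    (forall x' y', T x' y' -> hinner y' x = hinner x' y).

(* The Dirichlet problem [m u - D a G u = 0], [u - u0] in dom(G°), is solved by Lax-Milgram
   for the coercive form s(u, v) = (a G u, G v) + (m u, v) on dom(G°) with the graph norm;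
   the weak solution is a strong one because D is closed.  G maps BD(G) isometrically onto
   BD(D), with inverse D, so the definition of Lambda_H unfolds to: Lambda_H (kappa u0) = psi
   iff s(u, v0) = (psi, kappa v0) for every v0 in BD(G), u solving the problem with boundary
   value u0.  Hence (Lambda_H phi, phi) = s(u, u) lies in a sector.  I + Lambda_H is onto by
   Lax-Milgram for b(u0, v0) = s(u(u0), v0) + (kappa u0, kappa v0) on BD(G), coercive because
   u0 is the graph-norm-minimal extension of its boundary value.  For self-adjoint a and m the
   form s is Hermitian, so Lambda_H is symmetric, hence self-adjoint as I + Lambda_H is onto. *)

From Stdlib Require Import Reals Lra Lia Psatz.
From Stdlib Require Import Classical IndefiniteDescription
  FunctionalExtensionality PropExtensionality.
From Coquelicot Require Import Complex.
Open Scope R_scope.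

Arguments hadd_assoc {_} _ _ _.
Arguments hadd_comm {_} _ _.
Arguments hadd_zero {_} _.
Arguments hadd_opp {_} _.
Arguments hscal_assoc {_} _ _ _.
Arguments hscal_one {_} _.
Arguments hscal_distr_l {_} _ _ _.
Arguments hscal_distr_r {_} _ _ _.
Arguments hinner_conj {_} _ _.
Arguments hinner_add_l {_} _ _ _.
Arguments hinner_scal_l {_} _ _ _.
Arguments hinner_pos {_} _.
Arguments hinner_def {_} _ _.
Arguments hcomplete {_} _ _.

(* [ring] does not see through [Cconj], [Re] and [Im]; componentwise it does. *)
Ltac Ccomponents := apply injective_projections; simpl; ring.

Lemma C_re_im_eq (a b : C) : Re a = Re b -> Im a = Im b -> a = b.
Proof. destruct a, b; unfold Re, Im; simpl; intros; subst; reflexivity. Qed.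

Lemma Cminus_eq0 (a b : C) : Cminus a b = RtoC 0 -> a = b.
Proof.
  destruct a, b. unfold Cminus, Cplus, Copp, RtoC; simpl. intro H. injection H; intros.
  f_equal; lra.
Qed.

Lemma Cmod_small_eq0 (d : C) : (forall eps, 0 < eps -> Cmod d < eps) -> d = RtoC 0.
Proof.
  intro H. apply Cmod_eq_0. destruct (Req_dec (Cmod d) 0) as [E|E]; auto.
  pose proof (Cmod_ge_0 d). specialize (H (Cmod d)). lra.
Qed.

Lemma Cplus_opp_eq0 (a b : C) : Cplus a (Copp b) = RtoC 0 -> b = a.
Proof.
  destruct a, b. unfold Cplus, Copp, RtoC; simpl. intro H. injection H; intros. f_equal; lra.
Qed.

Lemma Rabs_Im_le_Cmod (c : C) : Rabs (Im c) <= Cmod c.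
Proof. eapply Rle_trans; [|apply Rmax_Cmod]. apply Rmax_r. Qed.

Lemma Rabs_le_inv a b : Rabs a <= b -> -b <= a /\ a <= b.
Proof. unfold Rabs; destruct (Rcase_abs a); intros; lra. Qed.

Lemma Rabs_lt_of_sq a b : 0 <= b -> a * a < b * b -> Rabs a < b.
Proof. unfold Rabs; destruct (Rcase_abs a); intros; nra. Qed.

Lemma Rabs_small_eq0 e : (forall eps, 0 < eps -> Rabs e < eps) -> e = 0.
Proof.
  intro H. destruct (Req_dec e 0) as [E|E]; auto.
  specialize (H (Rabs e) (Rabs_pos_lt _ E)). lra.
Qed.

Lemma Rdiv_nonneg (x y : R) : 0 <= x -> 0 < y -> 0 <= x / y.
Proof. intros. apply Rmult_le_pos; auto. left; apply Rinv_0_lt_compat; auto. Qed.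

Lemma small_factor (A eps : R) : 0 <= A -> 0 < eps -> exists eta, 0 < eta /\ A * eta < eps.
Proof.
  intros. exists (eps / (A + 1)). split; [apply Rdiv_lt_0_compat; lra|].
  unfold Rdiv. assert (A * / (A + 1) < 1).
  { apply Rmult_lt_reg_r with (A + 1); [lra|]. rewrite Rmult_assoc, Rinv_l by lra. lra. }
  assert (0 < / (A + 1)) by (apply Rinv_0_lt_compat; lra). nra.
Qed.

Lemma inv_INR_succ_small eps : 0 < eps ->
  exists N, forall n, (N <= n)%nat -> / (INR n + 1) < eps.
Proof.
  intro Heps. destruct (INR_archimed eps 1 Heps) as [N HN]. exists N. intros n Hn.
  apply le_INR in Hn. pose proof (pos_INR N).
  apply Rmult_lt_reg_r with (INR n + 1); [lra|]. rewrite Rinv_l by lra. nra.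
Qed.

Lemma quadratic_nonneg_discr (a b c : R) :
  (forall t, 0 <= a + b * t + c * (t * t)) -> 0 <= c -> b * b <= 4 * a * c.
Proof.
  intros H Hc. destruct (Req_dec c 0) as [E|E].
  - subst c. destruct (Req_dec b 0) as [Eb|Eb]; [subst; nra|].
    specialize (H (- (a + 1) / b)).
    replace (a + b * (- (a + 1) / b) + 0 * (- (a + 1) / b * (- (a + 1) / b))) with (-1) in H
      by (field; auto). lra.
  - specialize (H (- b / (2 * c))).
    replace (a + b * (- b / (2 * c)) + c * (- b / (2 * c) * (- b / (2 * c))))
      with ((4 * a * c - b * b) / (4 * c)) in H by (field; lra).
    apply Rmult_le_compat_r with (r := 4 * c) in H; [|lra].
    unfold Rdiv in H. rewrite Rmult_assoc, Rinv_l in H by lra. lra.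
Qed.

Section VectorSpace.
Context {X : CHilbert}.
Implicit Types x y z : X.

Lemma hadd_zero_l x : hadd hzero x = x.
Proof. rewrite hadd_comm; apply hadd_zero. Qed.

Lemma hadd_opp_l x : hadd (hopp x) x = hzero.
Proof. rewrite hadd_comm; apply hadd_opp. Qed.

Lemma hadd_cancel_l x y z : hadd x y = hadd x z -> y = z.
Proof.
  intro H. rewrite <- (hadd_zero_l y), <- (hadd_zero_l z), <- (hadd_opp_l x).
  rewrite <- !hadd_assoc, H. reflexivity.
Qed.

Lemma hopp_unique x y : hadd x y = hzero -> y = hopp x.
Proof. intro H. apply (hadd_cancel_l x). rewrite H, hadd_opp. reflexivity. Qed.

Lemma hscal_zero x : hscal (RtoC 0) x = hzero.
Proof.
  apply (hadd_cancel_l (hscal (RtoC 0) x)).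
  rewrite <- hscal_distr_r, hadd_zero. f_equal. Ccomponents.
Qed.

Lemma hscal_zero_v (c : C) : hscal c (@hzero X) = hzero.
Proof.
  apply (hadd_cancel_l (hscal c hzero)).
  rewrite <- hscal_distr_l, !hadd_zero. reflexivity.
Qed.

Lemma hopp_scal x : hopp x = hscal (RtoC (-1)) x.
Proof.
  symmetry. apply hopp_unique.
  rewrite <- (hscal_one x) at 1. rewrite <- hscal_distr_r.
  replace (Cplus (RtoC 1) (RtoC (-1))) with (RtoC 0) by Ccomponents.
  apply hscal_zero.
Qed.

Lemma hopp_hopp x : hopp (hopp x) = x.
Proof. symmetry. apply hopp_unique. apply hadd_opp_l. Qed.

Lemma hopp_add x y : hopp (hadd x y) = hadd (hopp x) (hopp y).
Proof. rewrite !hopp_scal, hscal_distr_l. reflexivity. Qed.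

Lemma hopp_zero : hopp (@hzero X) = hzero.
Proof. rewrite hopp_scal. apply hscal_zero_v. Qed.

Lemma hscal_opp (c : C) x : hscal c (hopp x) = hopp (hscal c x).
Proof. rewrite !hopp_scal, !hscal_assoc. f_equal. Ccomponents. Qed.

Lemma hsub_diag x : hsub x x = hzero.
Proof. apply hadd_opp. Qed.

Lemma hsub_eq x y : hsub x y = hzero -> x = y.
Proof.
  unfold hsub; intro H. apply hopp_unique in H. rewrite <- (hopp_hopp y), H.
  symmetry; apply hopp_hopp.
Qed.

Lemma hsub_split x y z : hsub x z = hadd (hsub x y) (hsub y z).
Proof.
  unfold hsub. rewrite <- hadd_assoc, (hadd_assoc (hopp y)), hadd_opp_l, hadd_zero_l.
  reflexivity.
Qed.

Lemma hsub_add_cancel x y : hadd (hsub x y) y = x.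
Proof. unfold hsub. rewrite <- hadd_assoc, hadd_opp_l, hadd_zero. reflexivity. Qed.

Lemma hadd_sub_cancel x y : hadd y (hsub x y) = x.
Proof. rewrite hadd_comm. apply hsub_add_cancel. Qed.

Lemma hsub_opp x y : hsub y x = hopp (hsub x y).
Proof. unfold hsub. rewrite hopp_add, hopp_hopp, hadd_comm. reflexivity. Qed.

Lemma hadd_sub_l x y : hsub (hadd x y) x = y.
Proof.
  unfold hsub. rewrite (hadd_comm x y), <- hadd_assoc, hadd_opp, hadd_zero. reflexivity.
Qed.

Lemma hsub_add_add x y x' y' : hadd (hsub x y) (hsub x' y') = hsub (hadd x x') (hadd y y').
Proof.
  unfold hsub. rewrite hopp_add. rewrite <- !hadd_assoc. f_equal.
  rewrite !hadd_assoc. f_equal. apply hadd_comm.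
Qed.

Lemma hsub_scal (c : C) x y : hscal c (hsub x y) = hsub (hscal c x) (hscal c y).
Proof. unfold hsub. rewrite hscal_distr_l, hscal_opp. reflexivity. Qed.

Lemma hsub_sub_sub x y z : hsub (hsub x z) (hsub y z) = hsub x y.
Proof.
  unfold hsub. rewrite hopp_add, hopp_hopp, <- hadd_assoc. f_equal.
  rewrite (hadd_comm (hopp y) z), hadd_assoc, hadd_opp_l, hadd_zero_l. reflexivity.
Qed.

Lemma hinner_add_r x y z : hinner x (hadd y z) = Cplus (hinner x y) (hinner x z).
Proof. rewrite hinner_conj, hinner_add_l, Cplus_conj, <- !hinner_conj. reflexivity. Qed.

Lemma hinner_scal_r (c : C) x y : hinner x (hscal c y) = Cmult (Cconj c) (hinner x y).
Proof. rewrite hinner_conj, hinner_scal_l, Cmult_conj, <- hinner_conj. reflexivity. Qed.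

Lemma hinner_zero_l y : hinner (@hzero X) y = RtoC 0.
Proof. rewrite <- (hscal_zero hzero), hinner_scal_l. Ccomponents. Qed.

Lemma hinner_zero_r y : hinner y (@hzero X) = RtoC 0.
Proof. rewrite hinner_conj, hinner_zero_l. Ccomponents. Qed.

Lemma hinner_opp_l x y : hinner (hopp x) y = Copp (hinner x y).
Proof. rewrite hopp_scal, hinner_scal_l. Ccomponents. Qed.

Lemma hinner_opp_r x y : hinner x (hopp y) = Copp (hinner x y).
Proof. rewrite hopp_scal, hinner_scal_r. Ccomponents. Qed.

Lemma hinner_sub_l x y z : hinner (hsub x y) z = Cminus (hinner x z) (hinner y z).
Proof. unfold hsub. rewrite hinner_add_l, hinner_opp_l. Ccomponents. Qed.

Lemma hinner_sub_r x y z : hinner z (hsub x y) = Cminus (hinner z x) (hinner z y).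
Proof. unfold hsub. rewrite hinner_add_r, hinner_opp_r. Ccomponents. Qed.

Lemma hinner_Im_diag x : Im (hinner x x) = 0.
Proof.
  pose proof (hinner_conj x x) as H. destruct (hinner x x) as [a b].
  unfold Cconj in H; simpl in *. injection H. lra.
Qed.

Lemma hinner_Re_diag_eq0 x : Re (hinner x x) = 0 -> x = hzero.
Proof.
  intro H. apply hinner_def. apply C_re_im_eq; [rewrite H|rewrite hinner_Im_diag]; reflexivity.
Qed.

End VectorSpace.

(* A subspace [S] of [X] with an inner product [ip] of its own, such as the domain of an
   operator with its graph inner product; the vector operations are those of [X]. *)
Record ip_space {X : CHilbert} (S : X -> Prop) (ip : X -> X -> C) : Prop := {
  ip_subspace : is_subspace S;
  ip_add_l : forall x y z, S x -> S y -> S z -> ip (hadd x y) z = Cplus (ip x z) (ip y z);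
  ip_scal_l : forall (c : C) x y, S x -> S y -> ip (hscal c x) y = Cmult c (ip x y);
  ip_conj : forall x y, S x -> S y -> ip y x = Cconj (ip x y);
  ip_pos : forall x, S x -> 0 <= Re (ip x x);
  ip_def : forall x, S x -> Re (ip x x) = 0 -> x = hzero }.

Arguments ip_subspace {X S ip}.
Arguments ip_add_l {X S ip}.
Arguments ip_scal_l {X S ip}.
Arguments ip_conj {X S ip}.
Arguments ip_pos {X S ip}.
Arguments ip_def {X S ip}.

Definition ip_norm {X : CHilbert} (ip : X -> X -> C) (x : X) : R := sqrt (Re (ip x x)).

Definition ip_cvg {X : CHilbert} (ip : X -> X -> C) (u : nat -> X) (l : X) : Prop :=
  forall eps, 0 < eps -> exists N, forall n, (N <= n)%nat -> ip_norm ip (hsub (u n) l) < eps.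

Definition ip_cauchy {X : CHilbert} (ip : X -> X -> C) (u : nat -> X) : Prop :=
  forall eps, 0 < eps -> exists N, forall n k, (N <= n)%nat -> (N <= k)%nat ->
    ip_norm ip (hsub (u n) (u k)) < eps.

Definition closed_in {X : CHilbert} (ip : X -> X -> C) (S S' : X -> Prop) : Prop :=
  forall u l, (forall n, S' (u n)) -> S l -> ip_cvg ip u l -> S' l.

Definition ip_complete {X : CHilbert} (S : X -> Prop) (ip : X -> X -> C) : Prop :=
  forall u, (forall n, S (u n)) -> ip_cauchy ip u -> exists l, S l /\ ip_cvg ip u l.

Section InnerProductSpace.
Context {X : CHilbert} {S : X -> Prop} {ip : X -> X -> C}.
Hypothesis Hsp : ip_space S ip.
Notation nrm := (ip_norm ip).

Lemma S_zero : S hzero. Proof. apply (ip_subspace Hsp). Qed.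
Lemma S_add x y : S x -> S y -> S (hadd x y). Proof. apply (ip_subspace Hsp). Qed.
Lemma S_scal c x : S x -> S (hscal c x). Proof. apply (ip_subspace Hsp). Qed.
Lemma S_opp x : S x -> S (hopp x). Proof. rewrite hopp_scal. apply S_scal. Qed.
Lemma S_sub x y : S x -> S y -> S (hsub x y). Proof. unfold hsub; auto using S_add, S_opp. Qed.

Local Hint Resolve S_zero S_add S_scal S_opp S_sub : ips.

Lemma ip_add_r x y z : S x -> S y -> S z -> ip x (hadd y z) = Cplus (ip x y) (ip x z).
Proof.
  intros. rewrite (ip_conj Hsp), (ip_add_l Hsp), Cplus_conj by auto with ips.
  rewrite <- !(ip_conj Hsp) by auto. reflexivity.
Qed.

Lemma ip_scal_r c x y : S x -> S y -> ip x (hscal c y) = Cmult (Cconj c) (ip x y).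
Proof.
  intros. rewrite (ip_conj Hsp), (ip_scal_l Hsp), Cmult_conj by auto with ips.
  rewrite <- (ip_conj Hsp) by auto. reflexivity.
Qed.

Lemma ip_zero_l y : S y -> ip hzero y = RtoC 0.
Proof. intros. rewrite <- (hscal_zero hzero), (ip_scal_l Hsp) by auto with ips. Ccomponents. Qed.

Lemma ip_opp_l x y : S x -> S y -> ip (hopp x) y = Copp (ip x y).
Proof. intros. rewrite hopp_scal, (ip_scal_l Hsp) by auto. Ccomponents. Qed.

Lemma ip_opp_r x y : S x -> S y -> ip x (hopp y) = Copp (ip x y).
Proof. intros. rewrite hopp_scal, ip_scal_r by auto. Ccomponents. Qed.

Lemma ip_sub_l x y z : S x -> S y -> S z -> ip (hsub x y) z = Cminus (ip x z) (ip y z).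
Proof. intros. unfold hsub. rewrite (ip_add_l Hsp), ip_opp_l by auto with ips. Ccomponents. Qed.

Lemma ip_sub_r x y z : S x -> S y -> S z -> ip z (hsub x y) = Cminus (ip z x) (ip z y).
Proof. intros. unfold hsub. rewrite ip_add_r, ip_opp_r by auto with ips. Ccomponents. Qed.

Lemma ip_Im_diag x : S x -> Im (ip x x) = 0.
Proof.
  intro Hx. pose proof (ip_conj Hsp x x Hx Hx) as H. destruct (ip x x) as [a b].
  unfold Cconj in H; simpl in *. injection H. lra.
Qed.

Lemma nrm_ge0 x : 0 <= nrm x.
Proof. apply sqrt_pos. Qed.

Lemma nrm_sq x : S x -> Re (ip x x) = nrm x * nrm x.
Proof. intro. symmetry. apply sqrt_sqrt, (ip_pos Hsp); auto. Qed.

Lemma nrm_eq0 x : S x -> nrm x = 0 -> x = hzero.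
Proof.
  intros Hx H. apply (ip_def Hsp); auto. unfold ip_norm in H.
  apply sqrt_eq_0 in H; auto. apply (ip_pos Hsp); auto.
Qed.

Lemma ip_expand x y (t : R) : S x -> S y ->
  Re (ip (hadd x (hscal (RtoC t) y)) (hadd x (hscal (RtoC t) y))) =
  Re (ip x x) + 2 * t * Re (ip y x) + t * t * Re (ip y y).
Proof.
  intros Hx Hy.
  rewrite (ip_add_l Hsp), !ip_add_r, !(ip_scal_l Hsp), !ip_scal_r by auto with ips.
  rewrite ((ip_conj Hsp) y x) by auto.
  destruct (ip x x) as [a1 a2], (ip x y) as [b1 b2], (ip y y) as [c1 c2].
  unfold Re, Cplus, Cmult, Cconj, RtoC; simpl. ring.
Qed.

(* Positivity of [x - t (x, y) y] for all real [t]. *)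
Lemma cauchy_schwarz_sq x y : S x -> S y ->
  Re (ip x y) * Re (ip x y) + Im (ip x y) * Im (ip x y) <= Re (ip x x) * Re (ip y y).
Proof.
  intros Hx Hy.
  set (c := ip x y). set (B := Re c * Re c + Im c * Im c).
  assert (Hq : forall t : R, 0 <= Re (ip x x) + (- 2 * B) * t + (B * Re (ip y y)) * (t * t)).
  { intro t.
    pose proof ((ip_pos Hsp) (hsub x (hscal (Cmult (RtoC t) c) y)) ltac:(auto with ips)) as P.
    rewrite ip_sub_l, !ip_sub_r, !(ip_scal_l Hsp), !ip_scal_r in P by auto with ips.
    rewrite ((ip_conj Hsp) x y) in P by auto. fold c in P.
    pose proof (ip_Im_diag y Hy) as Iy.
    unfold B. destruct c as [c1 c2], (ip x x) as [a1 a2], (ip y y) as [d1 d2].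
    unfold Re, Im, Cplus, Cmult, Cconj, RtoC, Cminus, Copp in *; simpl in *. subst d2. nra. }
  assert (HB : 0 <= B) by (unfold B; nra).
  pose proof ((ip_pos Hsp) y Hy).
  pose proof (quadratic_nonneg_discr _ _ _ Hq ltac:(nra)).
  fold B. destruct (Req_dec B 0) as [E|E]; [rewrite E; pose proof ((ip_pos Hsp) x Hx); nra|].
  apply Rmult_le_reg_l with B; nra.
Qed.

Lemma cauchy_schwarz x y : S x -> S y -> Cmod (ip x y) <= nrm x * nrm y.
Proof.
  intros Hx Hy. unfold Cmod, ip_norm. rewrite <- sqrt_mult by (apply (ip_pos Hsp); auto).
  apply sqrt_le_1_alt. pose proof (cauchy_schwarz_sq x y Hx Hy). unfold Re, Im in *. lra.
Qed.

Lemma cauchy_schwarz_Re x y : S x -> S y -> Rabs (Re (ip x y)) <= nrm x * nrm y.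
Proof. intros. eapply Rle_trans; [apply re_le_Cmod|apply cauchy_schwarz; auto]. Qed.

Lemma nrm_triangle x y : S x -> S y -> nrm (hadd x y) <= nrm x + nrm y.
Proof.
  intros Hx Hy.
  pose proof (ip_expand x y 1 Hx Hy) as E. rewrite hscal_one in E.
  pose proof (cauchy_schwarz_Re y x Hy Hx) as H. apply Rabs_le_inv in H.
  pose proof (nrm_ge0 x). pose proof (nrm_ge0 y).
  rewrite <- (sqrt_square (nrm x + nrm y)) by lra.
  unfold ip_norm at 1. apply sqrt_le_1_alt. rewrite E, (nrm_sq x), (nrm_sq y) by auto. nra.
Qed.

Lemma nrm_sub_triangle x y z : S x -> S y -> S z ->
  nrm (hsub x z) <= nrm (hsub x y) + nrm (hsub y z).
Proof. intros. rewrite (hsub_split x y z). apply nrm_triangle; auto with ips. Qed.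

Lemma nrm_scal (c : C) x : S x -> nrm (hscal c x) = Cmod c * nrm x.
Proof.
  intro Hx. unfold ip_norm, Cmod. rewrite <- sqrt_mult.
  - f_equal. rewrite (ip_scal_l Hsp), ip_scal_r by auto with ips.
    pose proof (ip_Im_diag x Hx). destruct c as [c1 c2], (ip x x) as [a1 a2].
    unfold Re, Im, Cmult, Cconj in *; simpl in *. subst a2. ring.
  - apply Rplus_le_le_0_compat; apply pow2_ge_0.
  - apply (ip_pos Hsp); auto.
Qed.

Lemma nrm_sub_sym x y : S x -> S y -> nrm (hsub x y) = nrm (hsub y x).
Proof.
  intros. rewrite (hsub_opp x y), hopp_scal, nrm_scal by auto with ips.
  replace (Cmod (RtoC (-1))) with 1; [ring|].
  unfold Cmod, RtoC; simpl. replace ((-1) * ((-1) * 1) + 0 * (0 * 1)) with 1 by ring.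
  symmetry; apply sqrt_1.
Qed.

Lemma ip_sub_bound x y z : S x -> S y -> S z ->
  Cmod (Cminus (ip x z) (ip y z)) <= nrm (hsub x y) * nrm z.
Proof. intros. rewrite <- ip_sub_l by auto. apply cauchy_schwarz; auto with ips. Qed.

Lemma parallelogram v w : S v -> S w ->
  Re (ip (hadd v w) (hadd v w)) + Re (ip (hsub v w) (hsub v w)) =
  2 * Re (ip v v) + 2 * Re (ip w w).
Proof.
  intros. rewrite (ip_add_l Hsp), !ip_add_r, ip_sub_l, !ip_sub_r by auto with ips.
  destruct (ip v v), (ip v w), (ip w v), (ip w w). unfold Re, Cplus, Cminus, Copp; simpl. ring.
Qed.

Lemma cvg_cauchy u l : (forall n, S (u n)) -> S l -> ip_cvg ip u l -> ip_cauchy ip u.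
Proof.
  intros Su Sl H eps Heps. destruct (H (eps / 2)) as [N HN]; [lra|].
  exists N. intros n k Hn Hk. eapply Rle_lt_trans; [apply (nrm_sub_triangle _ l); auto|].
  rewrite (nrm_sub_sym l) by auto. pose proof (HN n Hn). pose proof (HN k Hk). lra.
Qed.

Lemma orthogonal_complement_closed (P : X -> Prop) : (forall v, P v -> S v) ->
  closed_in ip S (fun u => S u /\ forall v, P v -> ip u v = RtoC 0).
Proof.
  intros HPS u l Hu Sl Hcv. split; auto. intros v Pv.
  apply Cmod_small_eq0. intros eps Heps.
  destruct (small_factor (nrm v) eps) as [e [He He']]; auto using nrm_ge0.
  destruct (Hcv e He) as [N HN]. specialize (HN N (le_n _)).
  destruct (Hu N) as [SuN HuN].
  replace (ip l v) with (Cminus (ip l v) (ip (u N) v)) by (rewrite HuN by auto; Ccomponents).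
  eapply Rle_lt_trans; [apply ip_sub_bound; auto|].
  rewrite nrm_sub_sym by auto. pose proof (nrm_ge0 (hsub (u N) l)). pose proof (nrm_ge0 v).
  nra.
Qed.

Section Riesz.
Hypothesis Hc : ip_complete S ip.
Variables (l : X -> C) (L : R).
Hypothesis l_add : forall x y, S x -> S y -> l (hadd x y) = Cplus (l x) (l y).
Hypothesis l_scal : forall c x, S x -> l (hscal c x) = Cmult c (l x).
Hypothesis l_bounded : forall x, S x -> Cmod (l x) <= L * nrm x.

(* The representative minimizes [energy]; minimizing sequences are Cauchy by the
   parallelogram law. *)
Let energy v := Re (ip v v) / 2 - Re (l v).

Lemma energy_lower_bound v : S v -> - (L * L) / 2 <= energy v.
Proof.
  intro Hv. unfold energy. rewrite nrm_sq by auto.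
  pose proof (re_le_Cmod (l v)) as H. pose proof (l_bounded v Hv). apply Rabs_le_inv in H.
  pose proof (nrm_ge0 v). pose proof (Rle_0_sqr (nrm v - L)). unfold Rsqr in *. nra.
Qed.

Lemma energy_shift v x t : S v -> S x ->
  energy (hadd v (hscal (RtoC t) x)) =
  energy v + t * (Re (ip x v) - Re (l x)) + (Re (ip x x) / 2) * (t * t).
Proof.
  intros. unfold energy. rewrite ip_expand, l_add, l_scal by auto with ips.
  destruct (l v), (l x). unfold Re, Cplus, Cmult, RtoC; simpl. field.
Qed.

Lemma energy_parallelogram v w : S v -> S w ->
  Re (ip (hsub v w) (hsub v w)) =
  4 * (energy v + energy w - 2 * energy (hscal (RtoC (/2)) (hadd v w))).
Proof.
  intros Hv Hw. unfold energy.
  rewrite (ip_scal_l Hsp), ip_scal_r, l_scal, l_add by auto with ips.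
  pose proof (parallelogram v w Hv Hw).
  destruct (l v), (l w), (ip (hadd v w) (hadd v w)).
  unfold Re, Cplus, Cmult, Cconj, RtoC in *; simpl in *. lra.
Qed.

Lemma energy_minimizing_sequence : exists (inf : R) (vs : nat -> X),
  (forall v, S v -> inf <= energy v) /\
  (forall n, S (vs n) /\ energy (vs n) < inf + / (INR n + 1)).
Proof.
  set (E := fun y => exists v, S v /\ y = - energy v).
  assert (Eb : bound E).
  { exists (L * L / 2). intros y [v [Hv ->]]. pose proof (energy_lower_bound v Hv). lra. }
  assert (Ene : exists y, E y) by (exists (- energy hzero); exists hzero; auto with ips).
  destruct (completeness E Eb Ene) as [sup [Hub Hlub]].
  assert (Hex : forall n : nat, exists v, S v /\ energy v < - sup + / (INR n + 1)).
  { intro n. apply NNPP. intro Hn.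
    assert (Hp : 0 < / (INR n + 1)) by (apply Rinv_0_lt_compat; pose proof (pos_INR n); lra).
    assert (Hb : is_upper_bound E (sup - / (INR n + 1))).
    { intros y [v [Hv ->]]. destruct (Rle_or_lt (- energy v) (sup - / (INR n + 1))); auto.
      exfalso. apply Hn. exists v. split; auto. lra. }
    apply Hlub in Hb. lra. }
  apply functional_choice in Hex. destruct Hex as [vs Hvs].
  exists (- sup), vs. split; auto.
  intros v Hv. assert (Ev : E (- energy v)) by (exists v; auto). apply Hub in Ev. lra.
Qed.

Section MinimizingSequence.
Variables (inf : R) (vs : nat -> X).
Hypothesis inf_le : forall v, S v -> inf <= energy v.
Hypothesis vs_minimizing : forall n, S (vs n) /\ energy (vs n) < inf + / (INR n + 1).

Lemma minimizing_S n : S (vs n).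
Proof. apply vs_minimizing. Qed.

Lemma minimizing_cauchy : ip_cauchy ip vs.
Proof.
  intros eps Heps. destruct (inv_INR_succ_small (eps * eps / 8)) as [N HN]; [nra|].
  exists N. intros n k Hn Hk.
  assert (Hmid := inf_le _ (S_scal (RtoC (/2)) _ (S_add _ _ (minimizing_S n) (minimizing_S k)))).
  pose proof (energy_parallelogram _ _ (minimizing_S n) (minimizing_S k)) as Hpar.
  pose proof (vs_minimizing n). pose proof (vs_minimizing k).
  pose proof (HN n Hn). pose proof (HN k Hk).
  unfold ip_norm. rewrite <- (sqrt_square eps) by lra. apply sqrt_lt_1_alt.
  split; [apply (ip_pos Hsp); auto using minimizing_S with ips|]. nra.
Qed.

(* The energy along [vs n + t x] is a nonnegative quadratic in [t] up to [1/(n+1)]. *)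
Lemma minimizing_slope_sq x n : S x ->
  (Re (ip x (vs n)) - Re (l x)) * (Re (ip x (vs n)) - Re (l x))
  <= 2 * Re (ip x x) * / (INR n + 1).
Proof.
  intro Hx. set (g := Re (ip x (vs n)) - Re (l x)).
  assert (Hq : forall t, 0 <= (energy (vs n) - inf) + g * t + (Re (ip x x) / 2) * (t * t)).
  { intro t. pose proof (inf_le _ (S_add _ _ (minimizing_S n) (S_scal (RtoC t) _ Hx))) as H.
    rewrite energy_shift in H by auto using minimizing_S. unfold g. lra. }
  pose proof ((ip_pos Hsp) x Hx).
  pose proof (quadratic_nonneg_discr _ _ _ Hq ltac:(lra)).
  pose proof (inf_le _ (minimizing_S n)). pose proof (vs_minimizing n). nra.
Qed.

Lemma minimizing_limit_represents_Re r : S r -> ip_cvg ip vs r ->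
  forall x, S x -> Re (ip x r) = Re (l x).
Proof.
  intros Sr Hr x Hx.
  cut (Re (ip x r) - Re (l x) = 0); [lra|]. apply Rabs_small_eq0. intros eps Heps.
  pose proof ((ip_pos Hsp) x Hx).
  destruct (small_factor (nrm x) (eps / 2)) as [e1 [He1 He1']]; [apply nrm_ge0|lra|].
  destruct (small_factor (2 * Re (ip x x)) ((eps / 2) * (eps / 2))) as [e2 [He2 He2']];
    [lra|nra|].
  destruct (Hr e1 He1) as [N1 HN1]. destruct (inv_INR_succ_small e2 He2) as [N2 HN2].
  set (n := max N1 N2).
  specialize (HN1 n (Nat.le_max_l _ _)). specialize (HN2 n (Nat.le_max_r _ _)).
  set (g := Re (ip x (vs n)) - Re (l x)).
  assert (Hg : Rabs g < eps / 2).
  { apply Rabs_lt_of_sq; [lra|]. eapply Rle_lt_trans; [apply minimizing_slope_sq; auto|].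
    assert (0 < / (INR n + 1)) by (apply Rinv_0_lt_compat; pose proof (pos_INR n); lra).
    nra. }
  assert (Hd : Rabs (Re (ip x r) - Re (l x) - g) <= nrm x * nrm (hsub (vs n) r)).
  { unfold g. replace (Re (ip x r) - Re (l x) - (Re (ip x (vs n)) - Re (l x)))
      with (Re (Cminus (ip x r) (ip x (vs n)))) by (unfold Re, Cminus, Copp, Cplus; simpl; ring).
    rewrite <- ip_sub_r, nrm_sub_sym by auto using minimizing_S.
    apply cauchy_schwarz_Re; auto using minimizing_S with ips. }
  pose proof (nrm_ge0 x). pose proof (nrm_ge0 (hsub (vs n) r)).
  pose proof (Rabs_triang (Re (ip x r) - Re (l x) - g) g) as Ht.
  replace (Re (ip x r) - Re (l x) - g + g) with (Re (ip x r) - Re (l x)) in Ht by ring.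
  nra.
Qed.

End MinimizingSequence.

Lemma riesz_Re : exists r, S r /\ forall x, S x -> Re (ip x r) = Re (l x).
Proof.
  destruct energy_minimizing_sequence as [inf [vs [Hinf Hvs]]].
  destruct (Hc vs) as [r [Sr Hr]].
  - intro n. apply Hvs.
  - apply (minimizing_cauchy inf); auto.
  - exists r. split; auto. apply (minimizing_limit_represents_Re inf vs); auto.
Qed.

Lemma riesz : exists r, S r /\ forall x, S x -> ip x r = l x.
Proof.
  destruct riesz_Re as [r [Sr Hr]]. exists r. split; auto. intros x Hx.
  apply C_re_im_eq; [apply Hr; auto|].
  pose proof (Hr (hscal Ci x) (S_scal _ _ Hx)) as H.
  rewrite (ip_scal_l Hsp), l_scal in H by auto.
  destruct (ip x r), (l x). unfold Re, Im, Cmult, Ci in *; simpl in *. lra.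
Qed.

End Riesz.

End InnerProductSpace.

Ltac subspace_step Hsp :=
  first [ apply (S_zero Hsp) | apply (S_add Hsp) | apply (S_scal Hsp)
        | apply (S_opp Hsp) | apply (S_sub Hsp) ].

#[global] Hint Extern 2 =>
  match goal with Hsp : ip_space ?S _ |- ?S _ => subspace_step Hsp end : ips.

Lemma ip_space_sub {X : CHilbert} (S S' : X -> Prop) (ip : X -> X -> C) :
  ip_space S ip -> is_subspace S' -> (forall x, S' x -> S x) -> ip_space S' ip.
Proof.
  intros [_ A1 A2 A3 A4 A5] HS' Hsub. constructor; auto.
Qed.

Lemma ip_complete_sub {X : CHilbert} (S S' : X -> Prop) (ip : X -> X -> C) :
  ip_complete S ip -> (forall x, S' x -> S x) -> closed_in ip S S' -> ip_complete S' ip.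
Proof.
  intros Hc Hsub Hcl u Su Hcau. destruct (Hc u) as [l [Sl Hl]]; auto.
  exists l. split; auto. apply (Hcl u); auto.
Qed.

Section LaxMilgram.
Context {X : CHilbert} {S : X -> Prop} {ip : X -> X -> C}.
Hypothesis Hsp : ip_space S ip.
Hypothesis Hc : ip_complete S ip.
Notation nrm := (ip_norm ip).

Variable s : X -> X -> C.
Variables M mu : R.
Hypothesis s_add_l : forall x y z, S x -> S y -> S z -> s (hadd x y) z = Cplus (s x z) (s y z).
Hypothesis s_scal_l : forall c x y, S x -> S y -> s (hscal c x) y = Cmult c (s x y).
Hypothesis s_add_r : forall x y z, S x -> S y -> S z -> s x (hadd y z) = Cplus (s x y) (s x z).
Hypothesis s_scal_r : forall c x y, S x -> S y -> s x (hscal c y) = Cmult (Cconj c) (s x y).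
Hypothesis M_nonneg : 0 <= M.
Hypothesis s_bounded : forall x y, S x -> S y -> Cmod (s x y) <= M * nrm x * nrm y.
Hypothesis mu_pos : 0 < mu.
Hypothesis s_coercive : forall x, S x -> mu * (nrm x * nrm x) <= Re (s x x).

Lemma form_zero_l v : S v -> s hzero v = RtoC 0.
Proof. intro. rewrite <- (hscal_zero hzero), s_scal_l by auto with ips. Ccomponents. Qed.

Lemma form_sub_l x y z : S x -> S y -> S z -> s (hsub x y) z = Cminus (s x z) (s y z).
Proof.
  intros. unfold hsub. rewrite s_add_l, hopp_scal, s_scal_l by auto with ips. Ccomponents.
Qed.

Lemma form_representation u : S u -> exists z, S z /\ forall v, S v -> ip z v = s u v.
Proof.
  intro Su.
  destruct (riesz Hsp Hc (fun v => Cconj (s u v)) (M * nrm u)) as [r [Sr Hr]].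
  - intros. rewrite s_add_r, Cplus_conj; auto.
  - intros. rewrite s_scal_r, Cmult_conj, Cconj_conj; auto.
  - intros. rewrite Cmod_conj. apply s_bounded; auto.
  - exists r. split; auto. intros v Sv. rewrite (ip_conj Hsp), Hr, Cconj_conj; auto.
Qed.

Lemma coercive_lower_bound u z : S u -> S z ->
  (forall v, S v -> s u v = ip z v) -> mu * nrm u <= nrm z.
Proof.
  intros Su Sz Huz. pose proof (s_coercive u Su) as Hco. rewrite Huz in Hco by auto.
  pose proof (cauchy_schwarz_Re Hsp z u Sz Su) as H. apply Rabs_le_inv in H.
  pose proof (nrm_ge0 (ip := ip) u). pose proof (nrm_ge0 (ip := ip) z).
  destruct (Req_dec (nrm u) 0) as [E|E]; [rewrite E; lra|].
  apply Rmult_le_reg_r with (nrm u); nra.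
Qed.

Definition form_range (z : X) : Prop :=
  S z /\ exists u, S u /\ forall v, S v -> s u v = ip z v.

Lemma form_range_subspace : is_subspace form_range.
Proof.
  split; [|split].
  - split; auto with ips. exists hzero. split; auto with ips.
    intros. rewrite form_zero_l, (ip_zero_l Hsp); auto.
  - intros x y [Sx [ux [Sux Hx]]] [Sy [uy [Suy Hy]]]. split; auto with ips.
    exists (hadd ux uy). split; auto with ips.
    intros. rewrite s_add_l, (ip_add_l Hsp), Hx, Hy; auto.
  - intros c x [Sx [ux [Sux Hx]]]. split; auto with ips.
    exists (hscal c ux). split; auto with ips.
    intros. rewrite s_scal_l, (ip_scal_l Hsp), Hx; auto.
Qed.

Lemma form_limit (us zs : nat -> X) u z : (forall n, S (us n)) -> (forall n, S (zs n)) ->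
  S u -> S z -> ip_cvg ip us u -> ip_cvg ip zs z ->
  (forall n v, S v -> s (us n) v = ip (zs n) v) ->
  forall v, S v -> s u v = ip z v.
Proof.
  intros Sus Szs Su Sz Hu Hz Hn v Sv.
  apply Cminus_eq0, Cmod_small_eq0. intros eps Heps.
  pose proof (nrm_ge0 (ip := ip) v).
  destruct (small_factor (M * nrm v) (eps / 2)) as [e1 [He1 He1']]; [nra|lra|].
  destruct (small_factor (nrm v) (eps / 2)) as [e2 [He2 He2']]; auto; [lra|].
  destruct (Hu e1 He1) as [N1 HN1]. destruct (Hz e2 He2) as [N2 HN2].
  set (n := max N1 N2).
  specialize (HN1 n (Nat.le_max_l _ _)). specialize (HN2 n (Nat.le_max_r _ _)).
  replace (Cminus (s u v) (ip z v)) with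
    (Cplus (s (hsub u (us n)) v) (Cminus (ip (zs n) v) (ip z v))).
  2:{ rewrite form_sub_l, Hn by auto. Ccomponents. }
  eapply Rle_lt_trans; [apply Cmod_triangle|].
  pose proof (s_bounded (hsub u (us n)) v ltac:(auto with ips) Sv).
  pose proof (ip_sub_bound Hsp (zs n) z v (Szs n) Sz Sv).
  rewrite (nrm_sub_sym Hsp) in HN1 by auto.
  pose proof (nrm_ge0 (ip := ip) (hsub u (us n))).
  pose proof (nrm_ge0 (ip := ip) (hsub (zs n) z)).
  assert (0 <= M * nrm v) by nra.
  nra.
Qed.

Lemma form_range_closed : closed_in ip S form_range.
Proof.
  intros zs z Hzs Sz Hcv.
  assert (Ex : forall n, exists u, S u /\ forall v, S v -> s u v = ip (zs n) v)
    by (intro n; apply Hzs).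
  apply functional_choice in Ex. destruct Ex as [us Hus].
  assert (Szs : forall n, S (zs n)) by (intro; apply Hzs).
  assert (Sus : forall n, S (us n)) by (intro; apply Hus).
  assert (Hd : forall n k, mu * nrm (hsub (us n) (us k)) <= nrm (hsub (zs n) (zs k))).
  { intros n k. apply coercive_lower_bound; auto with ips.
    intros v Sv. rewrite form_sub_l, (ip_sub_l Hsp), !(proj2 (Hus _)) by auto. reflexivity. }
  destruct (Hc us Sus) as [u [Su Hu]].
  { intros eps Heps. destruct (cvg_cauchy Hsp zs z Szs Sz Hcv (mu * eps)) as [N HN]; [nra|].
    exists N. intros n k Hn Hk. specialize (HN n k Hn Hk). specialize (Hd n k).
    apply Rmult_lt_reg_l with mu; lra. }
  split; auto. exists u. split; auto.
  apply (form_limit us zs); auto. intros n. apply Hus.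
Qed.

(* If [f] had a nonzero component [w] orthogonal to the range, the representative of
   [s w] would lie in the range, forcing [s w w = 0]. *)
Lemma form_range_full f : S f -> form_range f.
Proof.
  intro Sf.
  assert (RgS : forall z, form_range z -> S z) by (intros z [H _]; exact H).
  assert (Rsp : ip_space form_range ip)
    by (apply (ip_space_sub S); auto using form_range_subspace).
  assert (Rc : ip_complete form_range ip)
    by (apply (ip_complete_sub S); auto using form_range_closed).
  destruct (riesz Rsp Rc (fun z => ip z f) (nrm f)) as [p [Rp Hp]].
  - intros. apply (ip_add_l Hsp); auto.
  - intros. apply (ip_scal_l Hsp); auto.
  - intros. rewrite Rmult_comm. apply (cauchy_schwarz Hsp); auto.
  - set (w := hsub f p).
    assert (Sw : S w) by (unfold w; auto with ips).
    destruct (form_representation w Sw) as [zw [Szw Hzw]].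
    assert (Rzw : form_range zw) by (split; auto; exists w; split; auto; intros; symmetry; auto).
    assert (E0 : s w w = RtoC 0).
    { rewrite <- Hzw by auto. unfold w. rewrite (ip_sub_r Hsp), Hp by auto. Ccomponents. }
    assert (Hw : nrm w = 0).
    { pose proof (s_coercive w Sw) as H. rewrite E0 in H. unfold Re, RtoC in H; simpl in H.
      pose proof (nrm_ge0 (ip := ip) w).
      assert (nrm w * nrm w <= 0) by (apply Rmult_le_reg_l with mu; lra). nra. }
    apply (nrm_eq0 Hsp) in Hw; auto. apply hsub_eq in Hw. subst p. auto.
Qed.

Lemma lax_milgram (lf : X -> C) (K : R) :
  (forall x y, S x -> S y -> lf (hadd x y) = Cplus (lf x) (lf y)) ->
  (forall c x, S x -> lf (hscal c x) = Cmult (Cconj c) (lf x)) ->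
  (forall x, S x -> Cmod (lf x) <= K * nrm x) ->
  exists u, S u /\ forall v, S v -> s u v = lf v.
Proof.
  intros l_add l_scal l_bounded.
  destruct (riesz Hsp Hc (fun v => Cconj (lf v)) K) as [f [Sf Hf]].
  - intros. rewrite l_add, Cplus_conj; auto.
  - intros. rewrite l_scal, Cmult_conj, Cconj_conj; auto.
  - intros. rewrite Cmod_conj. apply l_bounded; auto.
  - destruct (form_range_full f Sf) as [_ [u [Su Hu]]]. exists u. split; auto.
    intros v Sv. rewrite Hu, (ip_conj Hsp), Hf, Cconj_conj; auto.
Qed.

End LaxMilgram.

Lemma hilbert_ip_space (X : CHilbert) : ip_space (fun _ : X => True) hinner.
Proof.
  constructor; intros; auto using hinner_add_l, hinner_scal_l, hinner_conj, hinner_pos,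
    hinner_Re_diag_eq0. repeat split.
Qed.

Lemma hilbert_ip_complete (X : CHilbert) : ip_complete (fun _ : X => True) hinner.
Proof. intros u _ Hu. destruct (hcomplete u Hu) as [l Hl]. exists l. split; auto. Qed.

Lemma hnorm_ge0 {X : CHilbert} (x : X) : 0 <= hnorm x.
Proof. apply sqrt_pos. Qed.

Lemma hnorm_sq {X : CHilbert} (x : X) : Re (hinner x x) = hnorm x * hnorm x.
Proof. symmetry. apply sqrt_sqrt, hinner_pos. Qed.

Lemma hinner_cauchy_schwarz {X : CHilbert} (x y : X) : Cmod (hinner x y) <= hnorm x * hnorm y.
Proof. apply (cauchy_schwarz (hilbert_ip_space X)); auto. Qed.

Lemma hnorm_sub_sym {X : CHilbert} (x y : X) : hnorm (hsub x y) = hnorm (hsub y x).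
Proof. apply (nrm_sub_sym (hilbert_ip_space X)); auto. Qed.

Lemma cvg_to_opp {X : CHilbert} (u : nat -> X) l :
  cvg_to u l -> cvg_to (fun n => hopp (u n)) (hopp l).
Proof.
  intros Hu eps Heps. destruct (Hu eps Heps) as [N HN]. exists N. intros n Hn.
  unfold hsub. rewrite <- hopp_add. fold (hsub (u n) l). rewrite hopp_scal.
  change (ip_norm hinner (hscal (RtoC (-1)) (hsub (u n) l)) < eps).
  rewrite (nrm_scal (hilbert_ip_space X)) by auto.
  replace (Cmod (RtoC (-1))) with 1; [rewrite Rmult_1_l; apply HN; auto|].
  unfold Cmod, RtoC; simpl. replace ((-1) * ((-1) * 1) + 0 * (0 * 1)) with 1 by ring.
  symmetry; apply sqrt_1.
Qed.

Lemma dom_adj_subspace {X Y : CHilbert} (dT : X -> Prop) (T : X -> Y) :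
  is_subspace (dom_adj dT T).
Proof.
  split; [|split].
  - exists hzero. intros v _. rewrite !hinner_zero_r. reflexivity.
  - intros x y [w1 H1] [w2 H2]. exists (hadd w1 w2). intros v Dv.
    rewrite !hinner_add_r, H1, H2 by auto. reflexivity.
  - intros c x [w Hw]. exists (hscal c w). intros v Dv. rewrite !hinner_scal_r, Hw; auto.
Qed.

Lemma adj_rel_closed {X Y : CHilbert} (dT : X -> Prop) (T : X -> Y) (u : nat -> Y)
  (w : nat -> X) y z :
  (forall n, adj_rel dT T (u n) (w n)) -> cvg_to u y -> cvg_to w z -> adj_rel dT T y z.
Proof.
  intros Hn Hu Hw x Dx. apply Cminus_eq0, Cmod_small_eq0. intros eps Heps.
  destruct (small_factor (hnorm (T x)) (eps / 2)) as [e1 [He1 He1']];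
    [apply hnorm_ge0|lra|].
  destruct (small_factor (hnorm x) (eps / 2)) as [e2 [He2 He2']]; [apply hnorm_ge0|lra|].
  destruct (Hu e1 He1) as [N1 HN1]. destruct (Hw e2 He2) as [N2 HN2].
  set (n := max N1 N2).
  specialize (HN1 n (Nat.le_max_l _ _)). specialize (HN2 n (Nat.le_max_r _ _)).
  replace (Cminus (hinner (T x) y) (hinner x z))
    with (Cplus (hinner (T x) (hsub y (u n))) (hinner x (hsub (w n) z))).
  2:{ rewrite !hinner_sub_r, (Hn n x Dx). ring. }
  eapply Rle_lt_trans; [apply Cmod_triangle|].
  pose proof (hinner_cauchy_schwarz (T x) (hsub y (u n))).
  pose proof (hinner_cauchy_schwarz x (hsub (w n) z)).
  rewrite hnorm_sub_sym in HN1.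
  pose proof (hnorm_ge0 (T x)). pose proof (hnorm_ge0 x).
  pose proof (hnorm_ge0 (hsub y (u n))). pose proof (hnorm_ge0 (hsub (w n) z)).
  nra.
Qed.

Section ClosedOperator.
Context {X Y : CHilbert} {dT : X -> Prop} {T : X -> Y}.
Hypothesis HT : densely_defined_closed dT T.

Lemma T_add x y : dT x -> dT y -> T (hadd x y) = hadd (T x) (T y).
Proof. apply HT. Qed.

Lemma T_scal c x : dT x -> T (hscal c x) = hscal c (T x).
Proof. apply HT. Qed.

Lemma graph_ip_space : ip_space dT (graph_inner T).
Proof.
  destruct HT as [Hsub _]. unfold graph_inner. constructor; auto.
  - intros. rewrite T_add, !hinner_add_l by auto. Ccomponents.
  - intros. rewrite T_scal, !hinner_scal_l by auto. Ccomponents.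
  - intros. rewrite (hinner_conj x y), (hinner_conj (T x) (T y)). Ccomponents.
  - intros. pose proof (hinner_pos x). pose proof (hinner_pos (T x)).
    unfold Re, Cplus in *; simpl in *. lra.
  - intros. pose proof (hinner_pos x). pose proof (hinner_pos (T x)).
    unfold Re, Cplus in *; simpl in *. apply hinner_Re_diag_eq0. unfold Re. lra.
Qed.

Lemma T_zero : T hzero = hzero.
Proof.
  rewrite <- (hscal_zero hzero), T_scal by apply (S_zero graph_ip_space). apply hscal_zero.
Qed.

Lemma T_sub x y : dT x -> dT y -> T (hsub x y) = hsub (T x) (T y).
Proof.
  intros. unfold hsub. rewrite T_add, !hopp_scal, T_scal; auto.
  rewrite hopp_scal. apply (S_scal graph_ip_space); auto.
Qed.

Lemma graph_norm_sq x : Re (graph_inner T x x) = hnorm x * hnorm x + hnorm (T x) * hnorm (T x).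
Proof. unfold graph_inner. rewrite <- !hnorm_sq. unfold Re, Cplus; simpl. ring. Qed.

Lemma hnorm_le_graph_norm x : hnorm x <= ip_norm (graph_inner T) x.
Proof.
  unfold ip_norm. rewrite graph_norm_sq, <- (sqrt_square (hnorm x)) at 1 by apply hnorm_ge0.
  apply sqrt_le_1_alt. pose proof (Rle_0_sqr (hnorm (T x))). unfold Rsqr in *. lra.
Qed.

Lemma hnorm_T_le_graph_norm x : hnorm (T x) <= ip_norm (graph_inner T) x.
Proof.
  unfold ip_norm. rewrite graph_norm_sq.
  rewrite <- (sqrt_square (hnorm (T x))) at 1 by apply hnorm_ge0.
  apply sqrt_le_1_alt. pose proof (Rle_0_sqr (hnorm x)). unfold Rsqr in *. lra.
Qed.

Lemma graph_norm_le x : ip_norm (graph_inner T) x <= hnorm x + hnorm (T x).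
Proof.
  unfold ip_norm. rewrite graph_norm_sq. pose proof (hnorm_ge0 x). pose proof (hnorm_ge0 (T x)).
  rewrite <- (sqrt_square (hnorm x + hnorm (T x))) by lra. apply sqrt_le_1_alt. nra.
Qed.

Lemma graph_ip_complete : ip_complete dT (graph_inner T).
Proof.
  intros u Su Hu.
  destruct (hcomplete u) as [x Hx].
  { intros eps Heps. destruct (Hu eps Heps) as [N HN]. exists N. intros.
    eapply Rle_lt_trans; [apply (hnorm_le_graph_norm (hsub (u n) (u k)))|]. apply HN; auto. }
  destruct (hcomplete (fun n => T (u n))) as [y Hy].
  { intros eps Heps. destruct (Hu eps Heps) as [N HN]. exists N. intros.
    eapply Rle_lt_trans; [|apply (HN n k); auto].
    fold (hsub (T (u n)) (T (u k))). rewrite <- T_sub by auto. apply hnorm_T_le_graph_norm. }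
  destruct HT as [_ [_ [_ Hcl]]].
  destruct (Hcl u x y Su Hx Hy) as [Dx Tx].
  exists x. split; auto. intros eps Heps.
  destruct (Hx (eps/2)) as [N1 HN1]; [lra|]. destruct (Hy (eps/2)) as [N2 HN2]; [lra|].
  exists (max N1 N2). intros n Hn.
  specialize (HN1 n ltac:(lia)). specialize (HN2 n ltac:(lia)).
  eapply Rle_lt_trans; [apply graph_norm_le|]. rewrite T_sub, Tx by auto.
  unfold hnorm, hsub in *. lra.
Qed.

Lemma graph_cvg (u : nat -> X) l : (forall n, dT (u n)) -> dT l ->
  ip_cvg (graph_inner T) u l -> cvg_to u l /\ cvg_to (fun n => T (u n)) (T l).
Proof.
  intros Du Dl Hcv. split; intros eps Heps; destruct (Hcv eps Heps) as [N HN];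
    exists N; intros n Hn; specialize (HN n Hn).
  - eapply Rle_lt_trans; [apply hnorm_le_graph_norm|exact HN].
  - rewrite <- T_sub by auto. eapply Rle_lt_trans; [apply hnorm_T_le_graph_norm|exact HN].
Qed.

(* With [x0] the graph-orthogonal projection of [(x, y)] onto the graph of [T], the residual
   satisfies [-T^* (y - T x0) = x - x0]; testing the hypothesis on it makes it vanish. *)
Lemma closed_biadjoint x y :
  (forall z w, adj_rel dT T z w -> hinner w x = hinner z y) -> dT x /\ T x = y.
Proof.
  intro Hyp.
  destruct (riesz graph_ip_space graph_ip_complete
              (fun v => Cplus (hinner v x) (hinner (T v) y)) (hnorm x + hnorm y))
    as [x0 [D0 H0]].
  - intros. rewrite T_add, !hinner_add_l by auto. Ccomponents.
  - intros. rewrite T_scal, !hinner_scal_l by auto. Ccomponents.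
  - intros v Dv. eapply Rle_trans; [apply Cmod_triangle|].
    pose proof (hinner_cauchy_schwarz v x). pose proof (hinner_cauchy_schwarz (T v) y).
    pose proof (hnorm_le_graph_norm v). pose proof (hnorm_T_le_graph_norm v).
    pose proof (hnorm_ge0 x). pose proof (hnorm_ge0 y). pose proof (hnorm_ge0 v).
    pose proof (hnorm_ge0 (T v)).
    nra.
  - set (z := hsub y (T x0)). set (w := hopp (hsub x x0)).
    assert (Hadj : adj_rel dT T z w).
    { intros v Dv. specialize (H0 v Dv). unfold graph_inner in H0.
      unfold z, w. rewrite hinner_sub_r, hinner_opp_r, hinner_sub_r.
      revert H0. generalize (hinner v x0) (hinner (T v) (T x0)) (hinner v x) (hinner (T v) y).
      intros a b c d H. apply Cminus_eq0.
      transitivity (Cminus (Cplus c d) (Cplus a b)); [ring|]. rewrite H. ring. }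
    pose proof (Hyp z w Hadj) as E1. pose proof (Hadj x0 D0) as E2.
    assert (Hzz : Cplus (hinner z z) (hinner (hsub x x0) (hsub x x0)) = RtoC 0).
    { replace (hinner z z) with (Cminus (hinner z y) (hinner z (T x0)))
        by (unfold z at 2; symmetry; apply hinner_sub_r).
      rewrite <- E1, (hinner_conj (T x0) z), E2, <- hinner_conj.
      unfold w. rewrite !hinner_opp_l, hinner_sub_r. Ccomponents. }
    pose proof (hinner_pos z). pose proof (hinner_pos (hsub x x0)).
    apply (f_equal Re) in Hzz. unfold Re, Cplus, RtoC in Hzz; simpl in Hzz.
    assert (K1 : Re (hinner z z) = 0) by (unfold Re in *; lra).
    assert (K2 : Re (hinner (hsub x x0) (hsub x x0)) = 0) by (unfold Re in *; lra).
    apply hinner_Re_diag_eq0, hsub_eq in K1. apply hinner_Re_diag_eq0, hsub_eq in K2.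
    subst. auto.
Qed.

End ClosedOperator.

#[global] Hint Extern 2 =>
  match goal with
  HT : densely_defined_closed ?d _ |- ?d _ => subspace_step (graph_ip_space HT)
  end : ips.

Definition closure_of {X : CHilbert} (P : X -> Prop) (x : X) : Prop :=
  forall eps, 0 < eps -> exists s, P s /\ hnorm (hsub x s) < eps.

Section Closure.
Context {X : CHilbert} (P : X -> Prop).

Lemma closure_of_self x : P x -> closure_of P x.
Proof.
  intros Px eps Heps. exists x. split; auto.
  unfold hnorm. rewrite hsub_diag, hinner_zero_l. simpl. rewrite sqrt_0. auto.
Qed.

Lemma closure_subspace : is_subspace P -> is_subspace (closure_of P).
Proof.
  intros (P0 & Padd & Pscal). pose proof (hilbert_ip_space X) as HX.
  split; [|split].
  - apply closure_of_self; auto.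
  - intros x y Hx Hy eps Heps.
    destruct (Hx (eps/2)) as [s [Ps Hxs]]; [lra|].
    destruct (Hy (eps/2)) as [t [Pt Hyt]]; [lra|].
    exists (hadd s t). split; auto. rewrite <- hsub_add_add.
    eapply Rle_lt_trans; [apply (nrm_triangle HX); auto|]. unfold hnorm, ip_norm in *. lra.
  - intros c x Hx eps Heps.
    destruct (small_factor (Cmod c) eps (Cmod_ge_0 c) Heps) as [e [He He']].
    destruct (Hx e He) as [s [Ps Hxs]].
    exists (hscal c s). split; auto. rewrite <- hsub_scal.
    change (ip_norm hinner (hscal c (hsub x s)) < eps). rewrite (nrm_scal HX) by auto.
    pose proof (Cmod_ge_0 c). unfold hnorm, ip_norm in *. nra.
Qed.

Lemma closure_closed : closed_in hinner (fun _ => True) (closure_of P).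
Proof.
  pose proof (hilbert_ip_space X) as HX.
  intros u l Hu _ Hcv eps Heps. destruct (Hcv (eps/2)) as [N HN]; [lra|].
  destruct (Hu N (eps/2)) as [s [Ps Hus]]; [lra|]. exists s. split; auto.
  eapply Rle_lt_trans; [apply (nrm_sub_triangle HX _ (u N)); auto|].
  rewrite (nrm_sub_sym HX) by auto. specialize (HN N (le_n _)). unfold hnorm, ip_norm in *. lra.
Qed.

Lemma dense_orthogonal_eq0 d : dense_set P -> (forall s, P s -> hinner d s = RtoC 0) -> d = hzero.
Proof.
  intros Hdense Horth. apply hinner_Re_diag_eq0.
  rewrite hnorm_sq. cut (hnorm d = 0); [intros ->; ring|].
  apply Rabs_small_eq0. intros eps Heps. rewrite Rabs_pos_eq by apply hnorm_ge0.
  destruct (Hdense d (eps / 2)) as [s [Ps Hs]]; [lra|].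
  assert (E : Re (hinner d d) = Re (hinner d (hsub d s))).
  { rewrite hinner_sub_r, (Horth s Ps). unfold Re, Cminus, Cplus, Copp, RtoC; simpl. ring. }
  rewrite hnorm_sq in E.
  pose proof (re_le_Cmod (hinner d (hsub d s))) as H1. apply Rabs_le_inv in H1.
  pose proof (hinner_cauchy_schwarz d (hsub d s)).
  pose proof (hnorm_ge0 d). pose proof (hnorm_ge0 (hsub d s)).
  destruct (Req_dec (hnorm d) 0) as [Z|Z]; [lra|].
  assert (hnorm d <= hnorm (hsub d s)) by (apply Rmult_le_reg_l with (hnorm d); nra).
  lra.
Qed.

End Closure.

Section LinearRelation.
Context {Z : CHilbert} (T : Z -> Z -> Prop).
Hypothesis Tsurj : forall f, exists x y, T x y /\ hadd y x = f.

(* [h] minus its projection onto the closure of the domain is [y + x] with [T x y];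
   orthogonality and accretivity force [x = 0], hence [y = 0]. *)
Lemma m_accretive_dense_domain : linear_rel T -> single_valued T ->
  (forall x y, T x y -> 0 <= Re (hinner y x)) -> dense_set (fun x => exists y, T x y).
Proof.
  intros (T00 & Tadd & Tscal) Tsv Hacc.
  set (dom := fun x => exists y, T x y).
  assert (Hdom : is_subspace dom).
  { split; [|split].
    - exists hzero; auto.
    - intros x1 x2 [y1 H1] [y2 H2]. exists (hadd y1 y2); auto.
    - intros c x [y H]. exists (hscal c y); auto. }
  assert (Csp : ip_space (closure_of dom) hinner).
  { apply (ip_space_sub (fun _ => True)); auto using hilbert_ip_space, closure_subspace. }
  assert (Cc : ip_complete (closure_of dom) hinner).
  { apply (ip_complete_sub (fun _ => True));
      auto using hilbert_ip_complete, closure_closed. }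
  intros h.
  destruct (riesz Csp Cc (fun x => hinner x h) (hnorm h)) as [p [Cp Hp]].
  - intros. apply hinner_add_l.
  - intros. apply hinner_scal_l.
  - intros. rewrite Rmult_comm. apply hinner_cauchy_schwarz.
  - destruct (Tsurj (hsub h p)) as [x [y [Txy Hd]]].
    assert (E : hinner x (hsub h p) = RtoC 0).
    { rewrite hinner_sub_r, Hp by (apply closure_of_self; exists y; auto). Ccomponents. }
    rewrite <- Hd, hinner_add_r in E.
    pose proof (Hacc x y Txy) as Hxy. rewrite hinner_conj, re_conj in Hxy.
    pose proof (hinner_pos x).
    assert (Ex : Re (hinner x x) = 0).
    { apply (f_equal Re) in E. unfold Re, Cplus, RtoC in *; simpl in *. lra. }
    apply hinner_Re_diag_eq0 in Ex. subst x.
    assert (y = hzero) by (apply (Tsv hzero); auto). subst y.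
    rewrite hadd_zero in Hd. symmetry in Hd. apply hsub_eq in Hd. subst p. auto.
Qed.

(* Solve [T x1 y1] with [x1 + y1 = x + y]; symmetry makes [x - x1] orthogonal to the
   whole range of [T + I], which is everything. *)
Lemma adjoint_sub_of_symmetric_surjective :
  (forall x y x' y', T x y -> T x' y' -> hinner y' x = hinner x' y) ->
  forall x y, (forall x' y', T x' y' -> hinner y' x = hinner x' y) -> T x y.
Proof.
  intros Hsym x y Hxy.
  destruct (Tsurj (hadd y x)) as [x1 [y1 [T1 E1]]].
  set (d := hsub x x1).
  assert (Ey : hsub y y1 = hopp d).
  { apply hopp_unique. unfold d. rewrite hadd_comm, hsub_add_add, E1. apply hsub_diag. }
  assert (Hd : forall x' y', T x' y' -> hinner (hadd y' x') d = RtoC 0).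
  { intros x' y' T'. unfold d. rewrite hinner_add_l, !hinner_sub_r.
    rewrite (Hxy x' y' T'), (Hsym x1 y1 x' y' T1 T').
    replace (Cminus (hinner x' y) (hinner x' y1)) with (hinner x' (hsub y y1))
      by apply hinner_sub_r.
    rewrite Ey, hinner_opp_r. unfold d. rewrite hinner_sub_r. Ccomponents. }
  destruct (Tsurj d) as [x2 [y2 [T2 E2]]].
  specialize (Hd x2 y2 T2). rewrite E2 in Hd.
  assert (H : d = hzero) by (apply hinner_Re_diag_eq0; rewrite Hd; reflexivity).
  unfold d in H. apply hsub_eq in H. subst x1.
  unfold d in Ey. rewrite hsub_diag, hopp_zero in Ey. apply hsub_eq in Ey. subst. auto.
Qed.

End LinearRelation.

Lemma bounded_linear_bound {X : CHilbert} (T : X -> X) : bounded_linear T ->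
  exists M, 0 <= M /\ forall x, hnorm (T x) <= M * hnorm x.
Proof.
  intros [_ [c Hc]]. exists (Rmax c 0). split; [apply Rmax_r|].
  intro x. eapply Rle_trans; [apply Hc|]. apply Rmult_le_compat_r; [apply hnorm_ge0|apply Rmax_l].
Qed.

Lemma coercive_Re_nonneg {X : CHilbert} (T : X -> X) x : coercive T -> 0 <= Re (hinner (T x) x).
Proof. intros [mu [Hmu Hco]]. pose proof (Hco x). pose proof (hnorm_ge0 x). nra. Qed.

Lemma coercive_sector {X : CHilbert} (T : X -> X) : bounded_linear T -> coercive T ->
  exists c, 0 <= c /\ forall x, Rabs (Im (hinner (T x) x)) <= c * Re (hinner (T x) x).
Proof.
  intros HT [mu [Hmu Hco]]. destruct (bounded_linear_bound T HT) as [M [HM HMT]].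
  exists (M / mu). split; [apply Rdiv_nonneg; auto|]. intro x.
  eapply Rle_trans; [apply Rabs_Im_le_Cmod|].
  eapply Rle_trans; [apply hinner_cauchy_schwarz|].
  pose proof (HMT x). pose proof (Hco x). pose proof (hnorm_ge0 x). pose proof (hnorm_ge0 (T x)).
  apply Rle_trans with (M * (hnorm x * hnorm x)); [nra|].
  replace (M * (hnorm x * hnorm x)) with (M / mu * (mu * (hnorm x * hnorm x))) by (field; lra).
  apply Rmult_le_compat_l; [apply Rdiv_nonneg|]; auto.
Qed.

Section DirichletToNeumann.
Variables (H0 H1 H : CHilbert) (domG : H0 -> Prop) (G : H0 -> H1)
  (domD : H1 -> Prop) (D : H1 -> H0) (kappa : H0 -> H) (a : H1 -> H1) (m : H0 -> H0).
Hypothesis HG : densely_defined_closed domG G.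
Hypothesis HD : densely_defined_closed domD D.
Hypothesis HDG : minus_adj_sub H0 H1 domG G domD D.

Notation W := (dom_Gring H0 H1 domD D).
Notation V := (BD_G H0 H1 domG G domD D).
Notation VD := (BD_D H0 H1 domG G domD D).
Notation gi := (graph_inner G).
Notation giD := (graph_inner D).
Notation gn := (ip_norm gi).

Lemma domG_ip_space : ip_space domG gi.
Proof. exact (graph_ip_space HG). Qed.

Lemma domG_ip_complete : ip_complete domG gi.
Proof. exact (graph_ip_complete HG). Qed.

Lemma Gring_sub_G x w : adj_rel domD D x w -> domG x /\ G x = hopp w.
Proof.
  intro Hx. apply (closed_biadjoint HG). intros z zz Hz.
  destruct (HDG z zz Hz) as [Dz Ez].
  pose proof (Hx z Dz) as E. rewrite Ez, hinner_opp_l in E.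
  rewrite hinner_opp_r, <- E. Ccomponents.
Qed.

Lemma W_domG x : W x -> domG x.
Proof. intros [w Hw]. apply (Gring_sub_G x w Hw). Qed.

Lemma V_domG u : V u -> domG u.
Proof. intros [Du _]; exact Du. Qed.

(* On dom(G°) = dom(D^* ) we have [G v = - D^* v], so graph-orthogonality to dom(G°)
   reads [(G u, D^* v) = (u, v)], i.e. [G u] lies in dom(D^{**}) = dom(D). *)
Lemma BD_G_D_G u : V u -> domD (G u) /\ D (G u) = u.
Proof.
  intros [Du Hu]. apply (closed_biadjoint HD). intros z zz Hz.
  destruct (Gring_sub_G z zz Hz) as [Dz Gz].
  specialize (Hu z (ex_intro _ zz Hz)). unfold graph_inner in Hu. rewrite Gz, hinner_opp_r in Hu.
  rewrite (hinner_conj (G u) zz), (hinner_conj u z). f_equal. apply Cplus_opp_eq0; auto.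
Qed.

Lemma BD_D_G_D y : VD y -> domG (D y) /\ G (D y) = y.
Proof.
  intros [Dy Hy]. apply (closed_biadjoint HG). intros z zz Hz.
  destruct (HDG z zz Hz) as [Dz Ez].
  specialize (Hy z (ex_intro _ zz Hz)). unfold graph_inner in Hy. rewrite Ez, hinner_opp_r in Hy.
  rewrite (hinner_conj (D y) zz), (hinner_conj y z). f_equal. apply Cplus_opp_eq0; auto.
Qed.

Lemma G_BD_G u : V u -> VD (G u).
Proof.
  intro Vu. destruct (BD_G_D_G u Vu) as [DGu EGu]. split; auto.
  intros v [zz Hv]. destruct (HDG v zz Hv) as [Dv Ev].
  unfold graph_inner. rewrite EGu, Ev, hinner_opp_r, (Hv u (proj1 Vu)). Ccomponents.
Qed.

Lemma D_BD_D y : VD y -> V (D y).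
Proof.
  intro Vy. destruct (BD_D_G_D y Vy) as [DDy EDy]. split; auto.
  intros v [w Hv]. destruct (Gring_sub_G v w Hv) as [Gv Ev].
  unfold graph_inner. rewrite EDy, Ev, hinner_opp_r, (Hv y (proj1 Vy)). Ccomponents.
Qed.

Lemma G_BD_isometry u v : V u -> V v -> giD (G u) (G v) = gi u v.
Proof.
  intros Vu Vv. unfold graph_inner.
  rewrite (proj2 (BD_G_D_G u Vu)), (proj2 (BD_G_D_G v Vv)). Ccomponents.
Qed.

Lemma W_ip_space : ip_space W gi.
Proof.
  apply (ip_space_sub domG); auto using domG_ip_space, W_domG.
  apply dom_adj_subspace.
Qed.

Lemma W_ip_complete : ip_complete W gi.
Proof.
  apply (ip_complete_sub domG); auto using domG_ip_complete, W_domG.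
  intros u l Hu Dl Hcv.
  assert (Hw : forall n, adj_rel domD D (u n) (hopp (G (u n)))).
  { intro n. destruct (Hu n) as [w Hw]. destruct (Gring_sub_G _ _ Hw) as [_ ->].
    rewrite hopp_hopp. exact Hw. }
  destruct (graph_cvg HG u l (fun n => W_domG _ (Hu n)) Dl Hcv) as [Hcu HcG].
  exists (hopp (G l)). apply (adj_rel_closed _ _ u (fun n => hopp (G (u n)))); auto.
  apply cvg_to_opp. exact HcG.
Qed.

Lemma V_ip_space : ip_space V gi.
Proof.
  pose proof domG_ip_space as SG.
  apply (ip_space_sub domG); auto; [|intros u Vu; apply Vu].
  split; [|split].
  - split; auto with ips. intros v Wv. apply (ip_zero_l SG); auto using W_domG.
  - intros x y [Dx Hx] [Dy Hy]. split; auto with ips.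
    intros v Wv. rewrite (ip_add_l SG), Hx, Hy by auto using W_domG. Ccomponents.
  - intros c x [Dx Hx]. split; auto with ips.
    intros v Wv. rewrite (ip_scal_l SG), Hx by auto using W_domG. Ccomponents.
Qed.

Lemma V_ip_complete : ip_complete V gi.
Proof.
  apply (ip_complete_sub domG); auto using domG_ip_complete; [intros u Vu; apply Vu|].
  apply (orthogonal_complement_closed domG_ip_space). apply W_domG.
Qed.

Local Hint Extern 2 (BD_G _ _ _ _ _ _ _) => subspace_step V_ip_space : ips.
Local Hint Extern 2 (dom_Gring _ _ _ _ _) => subspace_step W_ip_space : ips.

Hypothesis Ha : bounded_linear a.
Hypothesis Ha_coercive : coercive a.
Hypothesis Hm : bounded_linear m.
Hypothesis Hm_coercive : coercive m.

Lemma a_add x y : a (hadd x y) = hadd (a x) (a y). Proof. apply Ha; auto. Qed.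
Lemma a_scal c x : a (hscal c x) = hscal c (a x). Proof. apply Ha; auto. Qed.
Lemma m_add x y : m (hadd x y) = hadd (m x) (m y). Proof. apply Hm; auto. Qed.
Lemma m_scal c x : m (hscal c x) = hscal c (m x). Proof. apply Hm; auto. Qed.

Definition sform u v := Cplus (hinner (a (G u)) (G v)) (hinner (m u) v).

Lemma sform_add_l x y z : domG x -> domG y -> sform (hadd x y) z = Cplus (sform x z) (sform y z).
Proof. intros. unfold sform. rewrite (T_add HG), a_add, m_add, !hinner_add_l by auto. ring. Qed.

Lemma sform_scal_l c x y : domG x -> sform (hscal c x) y = Cmult c (sform x y).
Proof. intros. unfold sform. rewrite (T_scal HG), a_scal, m_scal, !hinner_scal_l by auto. ring. Qed.

Lemma sform_add_r x y z : domG y -> domG z -> sform x (hadd y z) = Cplus (sform x y) (sform x z).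
Proof. intros. unfold sform. rewrite (T_add HG), !hinner_add_r by auto. ring. Qed.

Lemma sform_scal_r c x y : domG y -> sform x (hscal c y) = Cmult (Cconj c) (sform x y).
Proof. intros. unfold sform. rewrite (T_scal HG), !hinner_scal_r by auto. ring. Qed.

Lemma sform_sub_l x y z : domG x -> domG y -> sform (hsub x y) z = Cminus (sform x z) (sform y z).
Proof.
  intros. unfold hsub. rewrite sform_add_l, hopp_scal, sform_scal_l by auto with ips.
  Ccomponents.
Qed.

Lemma sform_bounded : exists M, 0 <= M /\ forall x y, domG x -> domG y ->
  Cmod (sform x y) <= M * gn x * gn y.
Proof.
  destruct (bounded_linear_bound a Ha) as [Ma [Ma0 HMa]].
  destruct (bounded_linear_bound m Hm) as [Mm [Mm0 HMm]].
  exists (Ma + Mm). split; [lra|]. intros x y Dx Dy. unfold sform.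
  eapply Rle_trans; [apply Cmod_triangle|].
  pose proof (hinner_cauchy_schwarz (a (G x)) (G y)). pose proof (hinner_cauchy_schwarz (m x) y).
  pose proof (HMa (G x)). pose proof (HMm x).
  pose proof (hnorm_le_graph_norm (T := G) x). pose proof (hnorm_T_le_graph_norm (T := G) x).
  pose proof (hnorm_le_graph_norm (T := G) y). pose proof (hnorm_T_le_graph_norm (T := G) y).
  pose proof (hnorm_ge0 x). pose proof (hnorm_ge0 y).
  pose proof (hnorm_ge0 (G x)). pose proof (hnorm_ge0 (G y)).
  assert (hnorm (a (G x)) * hnorm (G y) <= Ma * gn x * gn y).
  { apply Rle_trans with (Ma * hnorm (G x) * hnorm (G y)); [nra|].
    rewrite !Rmult_assoc. apply Rmult_le_compat_l; auto. apply Rmult_le_compat; auto. }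
  assert (hnorm (m x) * hnorm y <= Mm * gn x * gn y).
  { apply Rle_trans with (Mm * hnorm x * hnorm y); [nra|].
    rewrite !Rmult_assoc. apply Rmult_le_compat_l; auto. apply Rmult_le_compat; auto. }
  nra.
Qed.

Lemma sform_coercive : exists mu, 0 < mu /\
  forall x, domG x -> mu * (gn x * gn x) <= Re (sform x x).
Proof.
  destruct Ha_coercive as [mua [mua0 Hmua]]. destruct Hm_coercive as [mum [mum0 Hmum]].
  exists (Rmin mua mum). split; [apply Rmin_glb_lt; auto|]. intros x Dx.
  unfold ip_norm. rewrite sqrt_sqrt by (apply (ip_pos domG_ip_space); auto).
  rewrite (graph_norm_sq (T := G)). unfold sform. rewrite re_plus.
  pose proof (Hmua (G x)). pose proof (Hmum x).
  pose proof (Rmin_l mua mum). pose proof (Rmin_r mua mum).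
  pose proof (hnorm_ge0 x). pose proof (hnorm_ge0 (G x)). nra.
Qed.

Lemma sform_sector : exists c, 0 <= c /\ forall x,
  Rabs (Im (sform x x)) <= c * Re (sform x x).
Proof.
  destruct (coercive_sector a Ha Ha_coercive) as [ca [ca0 Hca]].
  destruct (coercive_sector m Hm Hm_coercive) as [cm [cm0 Hcm]].
  exists (Rmax ca cm). split; [apply (Rle_trans _ ca); auto; apply Rmax_l|]. intro x.
  unfold sform. rewrite re_plus, im_plus.
  eapply Rle_trans; [apply Rabs_triang|].
  pose proof (Hca (G x)). pose proof (Hcm x).
  pose proof (Rmax_l ca cm). pose proof (Rmax_r ca cm).
  pose proof (coercive_Re_nonneg a (G x) Ha_coercive).
  pose proof (coercive_Re_nonneg m x Hm_coercive). nra.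
Qed.

Definition dirichlet_sol (u0 u : H0) : Prop :=
  domG u /\ domD (a (G u)) /\ hsub (m u) (D (a (G u))) = hzero /\ W (hsub u u0).

Lemma dirichlet_sol_domG u0 u : dirichlet_sol u0 u -> domG u.
Proof. intros [Du _]; exact Du. Qed.

Lemma dirichlet_sol_orth u0 u v : dirichlet_sol u0 u -> W v -> sform u v = RtoC 0.
Proof.
  intros [Du [Dq [Eq _]]] [w Hw]. destruct (Gring_sub_G v w Hw) as [Dv Gv].
  apply hsub_eq in Eq. unfold sform. rewrite Gv, hinner_opp_r, Eq, (Hw _ Dq). Ccomponents.
Qed.

Lemma sform_boundary u0 u u0' w : dirichlet_sol u0' w -> dirichlet_sol u0 u ->
  domG u0 -> sform w u0 = sform w u.
Proof.
  intros Sw Su D0. pose proof Su as [Du [_ [_ Wd]]].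
  transitivity (sform w (hadd u0 (hsub u u0))); [|rewrite hadd_sub_cancel; auto].
  rewrite sform_add_r, (dirichlet_sol_orth u0' w _ Sw Wd) by auto using W_domG.
  Ccomponents.
Qed.

(* Since [D] is closed, [D = D^{**}]: the weak equation is the strong one. *)
Lemma dirichlet_weak_strong u : domG u -> (forall v, W v -> sform u v = RtoC 0) ->
  domD (a (G u)) /\ D (a (G u)) = m u.
Proof.
  intros Du Hz. apply (closed_biadjoint HD). intros z zz Hz'.
  destruct (Gring_sub_G z zz Hz') as [Dz Gz].
  pose proof (Hz z (ex_intro _ zz Hz')) as E. unfold sform in E. rewrite Gz, hinner_opp_r in E.
  rewrite (hinner_conj (a (G u)) zz), (hinner_conj (m u) z). f_equal.
  apply Cplus_opp_eq0. rewrite Cplus_comm. auto.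
Qed.

Lemma dirichlet_sol_exists u0 : domG u0 -> exists u, dirichlet_sol u0 u.
Proof.
  intro D0.
  destruct sform_bounded as [M [M0 HM]]. destruct sform_coercive as [mu [mu0 Hmu]].
  destruct (lax_milgram W_ip_space W_ip_complete sform M mu)
    with (lf := fun v => Copp (sform u0 v)) (K := M * gn u0) as [u1 [Wu1 Hu1]];
    auto using sform_add_l, sform_scal_l, sform_add_r, sform_scal_r, W_domG.
  - intros. rewrite sform_add_r by auto using W_domG. Ccomponents.
  - intros. rewrite sform_scal_r by auto using W_domG. Ccomponents.
  - intros. rewrite Cmod_opp. apply HM; auto using W_domG.
  - set (u := hadd u0 u1).
    assert (Du : domG u) by (unfold u; auto using W_domG with ips).
    destruct (dirichlet_weak_strong u Du) as [Dq Eq].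
    { intros v Wv. unfold u. rewrite sform_add_l, Hu1 by auto using W_domG. Ccomponents. }
    exists u. repeat split; auto.
    + rewrite Eq. apply hsub_diag.
    + unfold u. rewrite hadd_sub_l. auto.
Qed.

Lemma dirichlet_sol_unique u0 u1 u2 : dirichlet_sol u0 u1 -> dirichlet_sol u0 u2 -> u1 = u2.
Proof.
  intros S1 S2. destruct sform_coercive as [mu [mu0 Hmu]].
  pose proof S1 as [D1 [_ [_ W1]]]. pose proof S2 as [D2 [_ [_ W2]]].
  assert (Wd : W (hsub u1 u2)) by (rewrite <- (hsub_sub_sub u1 u2 u0); auto with ips).
  assert (E : sform (hsub u1 u2) (hsub u1 u2) = RtoC 0).
  { rewrite sform_sub_l, (dirichlet_sol_orth u0 u1), (dirichlet_sol_orth u0 u2) by auto.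
    Ccomponents. }
  pose proof (Hmu _ (W_domG _ Wd)) as Hc. rewrite E in Hc. unfold Re, RtoC in Hc; simpl in Hc.
  pose proof (nrm_ge0 (ip := gi) (hsub u1 u2)).
  assert (Hn : gn (hsub u1 u2) = 0).
  { assert (gn (hsub u1 u2) * gn (hsub u1 u2) <= 0) by (apply Rmult_le_reg_l with mu; lra).
    unfold ip_norm in *. nra. }
  apply (nrm_eq0 domG_ip_space) in Hn; auto using W_domG. apply hsub_eq; auto.
Qed.

Lemma dirichlet_sol_zero : dirichlet_sol hzero hzero.
Proof.
  assert (a0 : a hzero = hzero) by (rewrite <- (hscal_zero hzero), a_scal, !hscal_zero; auto).
  assert (m0 : m hzero = hzero) by (rewrite <- (hscal_zero hzero), m_scal, !hscal_zero; auto).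
  repeat split; rewrite ?(T_zero HG), ?a0, ?(T_zero HD), ?m0, ?hsub_diag; auto with ips.
Qed.

Lemma dirichlet_sol_add u01 u02 u1 u2 : dirichlet_sol u01 u1 -> dirichlet_sol u02 u2 ->
  dirichlet_sol (hadd u01 u02) (hadd u1 u2).
Proof.
  intros [D1 [Q1 [E1 W1]]] [D2 [Q2 [E2 W2]]].
  repeat split; rewrite ?(T_add HG), ?a_add by auto; auto with ips.
  - rewrite (T_add HD), m_add, <- hsub_add_add, E1, E2 by auto. apply hadd_zero.
  - rewrite <- hsub_add_add. auto with ips.
Qed.

Lemma dirichlet_sol_scal c u0 u : dirichlet_sol u0 u -> dirichlet_sol (hscal c u0) (hscal c u).
Proof.
  intros [D1 [Q1 [E1 W1]]].
  repeat split; rewrite ?(T_scal HG), ?a_scal by auto; auto with ips.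
  - rewrite (T_scal HD), m_scal, <- hsub_scal, E1 by auto. apply hscal_zero_v.
  - rewrite <- hsub_scal. auto with ips.
Qed.

Lemma dirichlet_neumann_pairing u0 u v0 : dirichlet_sol u0 u -> V v0 ->
  giD (a (G u)) (G v0) = sform u v0.
Proof.
  intros [Du [Dq [Eq _]]] Vv. apply hsub_eq in Eq. unfold graph_inner, sform.
  rewrite (proj2 (BD_G_D_G v0 Vv)), <- Eq. reflexivity.
Qed.

(* BD(G) is graph-orthogonal to dom(G°), so [u0] is the minimal-norm extension. *)
Lemma dirichlet_sol_norm_ge u0 u : V u0 -> dirichlet_sol u0 u -> gn u0 <= gn u.
Proof.
  intros [D0 H0'] [Du [_ [_ Wd]]].
  set (d := hsub u u0).
  assert (Dd : domG d) by (apply W_domG; auto).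
  pose proof (ip_expand domG_ip_space u0 d 1 D0 Dd) as E. rewrite hscal_one in E.
  replace (hadd u0 d) with u in E by (unfold d; rewrite hadd_sub_cancel; auto).
  rewrite (ip_conj domG_ip_space u0 d), (H0' d Wd) in E by auto.
  unfold ip_norm. apply sqrt_le_1_alt. rewrite E.
  pose proof (ip_pos domG_ip_space d Dd). unfold Re, Cconj, RtoC in *; simpl in *. lra.
Qed.

Lemma dirichlet_sol_bounded : exists K, 0 <= K /\
  forall u0 u, V u0 -> dirichlet_sol u0 u -> gn u <= K * gn u0.
Proof.
  destruct sform_bounded as [M [M0 HM]]. destruct sform_coercive as [mu [mu0 Hmu]].
  exists (M / mu). split; [apply Rdiv_nonneg; auto|].
  intros u0 u V0 Su. pose proof V0 as [D0 _]. pose proof Su as [Du _].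
  pose proof (Hmu u Du) as Hc. rewrite <- (sform_boundary u0 u u0 u) in Hc by auto.
  pose proof (re_le_Cmod (sform u u0)) as Hre. apply Rabs_le_inv in Hre.
  pose proof (HM u u0 Du D0).
  pose proof (nrm_ge0 (ip := gi) u). pose proof (nrm_ge0 (ip := gi) u0).
  destruct (Req_dec (gn u) 0) as [E|E].
  { rewrite E. apply Rmult_le_pos; auto. apply Rdiv_nonneg; lra. }
  assert (mu * gn u <= M * gn u0) by (apply Rmult_le_reg_r with (gn u); nra).
  apply Rmult_le_reg_l with mu; auto.
  replace (mu * (M / mu * gn u0)) with (M * gn u0) by (field; lra). lra.
Qed.

Hypothesis Hk : kappa_hyp H0 H1 H domG G domD D kappa.

Lemma kappa_add u v : V u -> V v -> kappa (hadd u v) = hadd (kappa u) (kappa v).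
Proof. apply Hk. Qed.

Lemma kappa_scal c u : V u -> kappa (hscal c u) = hscal c (kappa u).
Proof. apply Hk. Qed.

Lemma kappa_bounded : exists c, 0 <= c /\ forall u, V u -> hnorm (kappa u) <= c * gn u.
Proof.
  destruct Hk as [_ [[c Hc] _]]. exists (Rmax c 0). split; [apply Rmax_r|].
  intros u Vu. eapply Rle_trans; [apply Hc; auto|].
  apply Rmult_le_compat_r; [apply sqrt_pos|apply Rmax_l].
Qed.

Definition DtN_weak (phi psi : H) : Prop :=
  exists u0, V u0 /\ kappa u0 = phi /\
  exists u, dirichlet_sol u0 u /\ forall v0, V v0 -> sform u v0 = hinner psi (kappa v0).

Notation DtN := (DtN_H H0 H1 H domG G domD D a m kappa).

(* [pi_BD(D) (a G u) = G w] is tested against [G v0], [v0] in BD(G), which exhaust BD(D);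
   there [G] is isometric and [kappa^*] turns [(v0, w)_BD(G)] into [(kappa v0, psi)]. *)
Lemma DtN_H_weak phi psi : DtN phi psi <-> DtN_weak phi psi.
Proof.
  pose proof domG_ip_space as SG. pose proof (graph_ip_space HD) as SD.
  split.
  - intros [u0 [V0 [E0 [w [[Vw Hw] [u [Du [Dq [Eq [Wd [BDf Hproj]]]]]]]]]]].
    assert (Su : dirichlet_sol u0 u) by (repeat split; auto).
    exists u0. split; auto. split; auto. exists u. split; auto.
    intros v0 Vv. rewrite <- (dirichlet_neumann_pairing u0 u v0 Su Vv).
    pose proof (Hproj (G v0) (G_BD_G v0 Vv)) as P.
    rewrite (ip_sub_l SD) in P by (auto; apply BD_G_D_G; auto).
    apply Cminus_eq0 in P. rewrite P, G_BD_isometry, (ip_conj SG v0 w) by (apply Vw || apply Vv).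
    rewrite <- Hw by auto. rewrite <- hinner_conj. reflexivity.
  - intros [u0 [V0 [E0 [u [Su Hu]]]]].
    destruct kappa_bounded as [ck [ck0 Hck]].
    destruct (riesz V_ip_space V_ip_complete (fun v => hinner (kappa v) psi) (ck * hnorm psi))
      as [w [Vw Hw]].
    + intros. rewrite kappa_add, hinner_add_l; auto.
    + intros. rewrite kappa_scal, hinner_scal_l; auto.
    + intros x Vx. eapply Rle_trans; [apply hinner_cauchy_schwarz|]. pose proof (Hck x Vx).
      pose proof (hnorm_ge0 psi). pose proof (hnorm_ge0 (kappa x)). nra.
    + exists u0. split; auto. split; auto. exists w. split; [split; auto; intros; symmetry; auto|].
      pose proof Su as [Du [Dq [Eq Wd]]].
      exists u. do 4 (split; auto). split; [apply G_BD_G; auto|]. intros r Vr.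
      destruct (BD_D_G_D r Vr) as [_ Er]. rewrite <- Er.
      rewrite (ip_sub_l SD) by (auto; apply BD_G_D_G; auto using D_BD_D).
      rewrite (dirichlet_neumann_pairing u0 u), G_BD_isometry, Hu by auto using D_BD_D.
      rewrite (ip_conj SG _ w), Hw, <- hinner_conj by (apply Vw || apply D_BD_D; auto).
      Ccomponents.
Qed.

Lemma DtN_H_eq_weak : DtN = DtN_weak.
Proof.
  apply functional_extensionality; intro phi. apply functional_extensionality; intro psi.
  apply propositional_extensionality, DtN_H_weak.
Qed.

Lemma DtN_weak_linear : linear_rel DtN_weak.
Proof.
  split; [|split].
  - exists hzero. split; auto with ips. split.
    + rewrite <- (hscal_zero hzero), kappa_scal, hscal_zero; auto with ips.
    + exists hzero. split; [apply dirichlet_sol_zero|]. intros.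
      rewrite <- (hscal_zero hzero), sform_scal_l, hinner_zero_l by auto with ips. Ccomponents.
  - intros x1 y1 x2 y2 [u01 [V1 [E1 [u1 [S1 H1']]]]] [u02 [V2 [E2 [u2 [S2 H2']]]]].
    exists (hadd u01 u02). split; auto with ips. split; [rewrite kappa_add, E1, E2; auto|].
    exists (hadd u1 u2). split; [apply dirichlet_sol_add; auto|].
    intros v0 Vv. rewrite sform_add_l, H1', H2', hinner_add_l; eauto using dirichlet_sol_domG.
  - intros c x y [u0 [V0 [E0 [u [Su Hu]]]]].
    exists (hscal c u0). split; auto with ips. split; [rewrite kappa_scal, E0; auto|].
    exists (hscal c u). split; [apply dirichlet_sol_scal; auto|].
    intros v0 Vv. rewrite sform_scal_l, Hu, hinner_scal_l; eauto using dirichlet_sol_domG.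
Qed.

Lemma DtN_weak_single_valued : single_valued DtN_weak.
Proof.
  intros x y1 y2 [u01 [V1 [E1 [u1 [S1 H1']]]]] [u02 [V2 [E2 [u2 [S2 H2']]]]].
  subst x. apply Hk in E2; auto. subst u02.
  pose proof (dirichlet_sol_unique _ _ _ S1 S2). subst u2.
  apply hsub_eq, (dense_orthogonal_eq0 (fun h => exists v, V v /\ kappa v = h)).
  - intros h eps Heps. destruct Hk as [_ [_ [_ Hdense]]].
    destruct (Hdense h eps Heps) as [v [Vv Hv]]. exists (kappa v). eauto.
  - intros s [v [Vv <-]]. rewrite hinner_sub_l, <- H1', <- H2' by auto. Ccomponents.
Qed.

Lemma DtN_weak_sector : exists c, 0 <= c /\ forall phi psi, DtN_weak phi psi ->
  0 <= Re (hinner psi phi) /\ Rabs (Im (hinner psi phi)) <= c * Re (hinner psi phi).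
Proof.
  destruct sform_coercive as [mu [mu0 Hmu]]. destruct sform_sector as [c [c0 Hc]].
  exists c. split; auto. intros phi psi [u0 [V0 [<- [u [Su Hu]]]]].
  rewrite <- Hu, (sform_boundary u0 u u0 u) by (auto; apply V0).
  split; auto. pose proof (Hmu u (dirichlet_sol_domG _ _ Su)).
  pose proof (nrm_ge0 (ip := gi) u). nra.
Qed.

Lemma DtN_weak_symmetric : selfadjoint_bounded a -> selfadjoint_bounded m ->
  forall x y x' y', DtN_weak x y -> DtN_weak x' y' -> hinner y' x = hinner x' y.
Proof.
  intros Sa Sm x y x' y' [u0 [V0 [<- [u [Su Hu]]]]] [u0' [V0' [<- [u' [Su' Hu']]]]].
  rewrite <- Hu' by auto. rewrite (hinner_conj y), <- Hu by auto.
  rewrite (sform_boundary u0 u u0' u'), (sform_boundary u0' u' u0 u)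
    by (auto; apply V0 || apply V0').
  unfold sform. rewrite Sa, Sm, Cplus_conj, <- !hinner_conj. reflexivity.
Qed.

Section Surjectivity.
Variable Sol : H0 -> H0.
Hypothesis HSol : forall u0, V u0 -> dirichlet_sol u0 (Sol u0).

Lemma Sol_domG x : V x -> domG (Sol x).
Proof. intro Vx. exact (dirichlet_sol_domG _ _ (HSol x Vx)). Qed.

Lemma Sol_add x y : V x -> V y -> Sol (hadd x y) = hadd (Sol x) (Sol y).
Proof.
  intros. apply (dirichlet_sol_unique (hadd x y)).
  - apply HSol. auto with ips.
  - apply dirichlet_sol_add; auto.
Qed.

Lemma Sol_scal c x : V x -> Sol (hscal c x) = hscal c (Sol x).
Proof.
  intros. apply (dirichlet_sol_unique (hscal c x)).
  - apply HSol. auto with ips.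
  - apply dirichlet_sol_scal; auto.
Qed.

(* [Lambda_H phi + phi = f] with [phi = kappa u0] reads [b(u0, v0) = (f, kappa v0)]. *)
Definition resolvent_form u0 v0 := Cplus (sform (Sol u0) v0) (hinner (kappa u0) (kappa v0)).

Lemma resolvent_form_bounded : exists M, 0 <= M /\ forall x y, V x -> V y ->
  Cmod (resolvent_form x y) <= M * gn x * gn y.
Proof.
  destruct sform_bounded as [M [M0 HM]]. destruct dirichlet_sol_bounded as [K [K0 HK]].
  destruct kappa_bounded as [ck [ck0 Hck]].
  exists (M * K + ck * ck). split; [nra|]. intros x y Vx Vy. unfold resolvent_form.
  eapply Rle_trans; [apply Cmod_triangle|].
  pose proof (HM _ _ (Sol_domG x Vx) (proj1 Vy)).
  pose proof (HK x _ Vx (HSol x Vx)).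
  pose proof (hinner_cauchy_schwarz (kappa x) (kappa y)). pose proof (Hck x Vx).
  pose proof (Hck y Vy).
  pose proof (nrm_ge0 (ip := gi) x). pose proof (nrm_ge0 (ip := gi) y).
  pose proof (nrm_ge0 (ip := gi) (Sol x)).
  pose proof (hnorm_ge0 (kappa x)). pose proof (hnorm_ge0 (kappa y)).
  assert (M * gn (Sol x) * gn y <= M * K * gn x * gn y).
  { rewrite !Rmult_assoc. apply Rmult_le_compat_l; auto. rewrite <- Rmult_assoc.
    apply Rmult_le_compat_r; auto. }
  assert (hnorm (kappa x) * hnorm (kappa y) <= ck * ck * gn x * gn y).
  { replace (ck * ck * gn x * gn y) with ((ck * gn x) * (ck * gn y)) by ring.
    apply Rmult_le_compat; auto. }
  nra.
Qed.

Lemma resolvent_form_coercive : exists mu, 0 < mu /\ forall x, V x ->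
  mu * (gn x * gn x) <= Re (resolvent_form x x).
Proof.
  destruct sform_coercive as [mu [mu0 Hmu]]. exists mu. split; auto. intros x Vx.
  unfold resolvent_form. rewrite re_plus.
  pose proof (Hmu _ (Sol_domG x Vx)) as Hc.
  rewrite <- (sform_boundary x (Sol x) x (Sol x)) in Hc by (auto; apply Vx).
  pose proof (dirichlet_sol_norm_ge x _ Vx (HSol x Vx)).
  pose proof (nrm_ge0 (ip := gi) x).
  pose proof (hinner_pos (kappa x)).
  assert (gn x * gn x <= gn (Sol x) * gn (Sol x)) by (apply Rmult_le_compat; auto).
  nra.
Qed.

Lemma DtN_weak_add_id_surjective_of_solver :
  forall f, exists x y, DtN_weak x y /\ hadd y x = f.
Proof.
  intro f.
  destruct resolvent_form_bounded as [M [M0 HM]].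
  destruct resolvent_form_coercive as [mu [mu0 Hmu]].
  destruct kappa_bounded as [ck [ck0 Hck]].
  destruct (lax_milgram V_ip_space V_ip_complete resolvent_form M mu)
    with (lf := fun v => hinner f (kappa v)) (K := hnorm f * ck) as [u0 [V0 Hu0]]; auto.
  - intros. unfold resolvent_form.
    rewrite Sol_add, sform_add_l, kappa_add, hinner_add_l by auto using Sol_domG.
    ring.
  - intros. unfold resolvent_form.
    rewrite Sol_scal, sform_scal_l, kappa_scal, hinner_scal_l by auto using Sol_domG.
    ring.
  - intros. unfold resolvent_form.
    rewrite sform_add_r, kappa_add, hinner_add_r by auto using V_domG. ring.
  - intros. unfold resolvent_form.
    rewrite sform_scal_r, kappa_scal, hinner_scal_r by auto using V_domG. ring.
  - intros. rewrite kappa_add, hinner_add_r; auto.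
  - intros. rewrite kappa_scal, hinner_scal_r; auto.
  - intros x Vx. eapply Rle_trans; [apply hinner_cauchy_schwarz|]. pose proof (Hck x Vx).
    pose proof (hnorm_ge0 f). rewrite Rmult_assoc. apply Rmult_le_compat_l; auto.
  - exists (kappa u0), (hsub f (kappa u0)). split; [|apply hsub_add_cancel].
    exists u0. split; auto. split; auto. exists (Sol u0). split; auto.
    intros v0 Vv. specialize (Hu0 v0 Vv). unfold resolvent_form in Hu0.
    rewrite hinner_sub_l, <- Hu0. ring.
Qed.

End Surjectivity.

Lemma DtN_weak_add_id_surjective : forall f, exists x y, DtN_weak x y /\ hadd y x = f.
Proof.
  assert (Ex : forall u0, exists u, V u0 -> dirichlet_sol u0 u).
  { intro u0. destruct (classic (V u0)) as [Vu|Vu].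
    - destruct (dirichlet_sol_exists u0) as [u Hu]; [apply Vu|]. exists u; auto.
    - exists hzero. intro; contradiction. }
  apply functional_choice in Ex. destruct Ex as [Sol HSol].
  apply (DtN_weak_add_id_surjective_of_solver Sol HSol).
Qed.

Lemma DtN_H_m_sectorial : m_sectorial DtN.
Proof.
  rewrite DtN_H_eq_weak. destruct DtN_weak_sector as [c [c0 Hc]].
  split; [apply DtN_weak_linear|]. split; [apply DtN_weak_single_valued|].
  exists 0, c. split; auto. split.
  - intros x y Hxy _. rewrite Rminus_0_r. apply Hc; auto.
  - exists 1. split; [lra|]. intro f.
    destruct (DtN_weak_add_id_surjective f) as [x [y [Hxy E]]]. exists x, y. split; auto.
    replace (RtoC (1 - 0)) with (RtoC 1) by (f_equal; ring). rewrite hscal_one. auto.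
Qed.

Lemma DtN_H_selfadjoint : selfadjoint_bounded a -> selfadjoint_bounded m ->
  selfadjoint_rel DtN.
Proof.
  intros Sa Sm. rewrite DtN_H_eq_weak. destruct DtN_weak_sector as [c [c0 Hc]].
  pose proof (DtN_weak_symmetric Sa Sm) as Hsym.
  split; [apply DtN_weak_linear|]. split; [apply DtN_weak_single_valued|]. split.
  - apply m_accretive_dense_domain; auto using DtN_weak_add_id_surjective, DtN_weak_linear,
      DtN_weak_single_valued.
    intros. apply Hc; auto.
  - intros x y. split; [intros Hxy x' y' Hx'y'; apply Hsym; auto|].
    apply adjoint_sub_of_symmetric_surjective; auto using DtN_weak_add_id_surjective.
Qed.

End DirichletToNeumann.

Theorem theorem3p4 (H0 H1 H : CHilbert)
  (domG : H0 -> Prop) (G : H0 -> H1) (domD : H1 -> Prop) (D : H1 -> H0)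
  (kappa : H0 -> H) (a : H1 -> H1) (m : H0 -> H0) :
  densely_defined_closed domG G ->
  densely_defined_closed domD D ->
  minus_adj_sub H0 H1 domG G domD D ->
  kappa_hyp H0 H1 H domG G domD D kappa ->
  bounded_linear a -> coercive a ->
  bounded_linear m -> coercive m ->
  m_sectorial (DtN_H H0 H1 H domG G domD D a m kappa) /\
  (selfadjoint_bounded a -> selfadjoint_bounded m ->
   selfadjoint_rel (DtN_H H0 H1 H domG G domD D a m kappa)).
Proof.
  intros HG HD HDG Hk Ha Hac Hm Hmc. split.
  - apply DtN_H_m_sectorial; auto.
  - intros Sa Sm. apply DtN_H_selfadjoint; auto.
Qed.
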